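(* For every integer $m\ge2$, \[ \int\cdots\int_{V_m}\frac{dx_1\cdots dx_m}{x_1\cdots x_m}=(m-1)!\,\zeta(m). \]
   Context: $V_m:=\{(x_1,\dots,x_m)\in[0,1]^m : x_1+x_j\ge1 \text{ for } j=2,\dots,m\}$; $\zeta$ is the Riemann zeta function. *)

From Stdlib Require Import Reals Lra Lia List.
Open Scope R_scope.

(* Points of R^m are functions x : nat -> R; coordinate x_{i+1} of the paper
   is (x i), for i < m. *)

Fixpoint prodR (m : nat) (x : nat -> R) : R :=
  match m with
  | O => 1
  | S k => prodR k x * x k
  end.

Definition In_V (m : nat) (x : nat -> R) : Prop :=
  (forall i, (i < m)%nat -> 0 <= x i <= 1) /\
  (forall j, (1 <= j < m)%nat -> x 0%nat + x j >= 1).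

Record box := Box { lo : nat -> R; hi : nat -> R }.

Definition in_boxb (m : nat) (B : box) (x : nat -> R) : bool :=
  forallb (fun i => if Rle_dec (lo B i) (x i) then
                      if Rle_dec (x i) (hi B i) then true else false
                    else false) (seq 0 m).

Definition box_vol (m : nat) (B : box) : R := prodR m (fun i => hi B i - lo B i).

(* A nonnegative step function: finite list of (coefficient, box),
   s(x) = sum_k c_k 1_{B_k}(x). *)
Definition step_fun := list (R * box).

Definition step_valid (m : nat) (s : step_fun) : Prop :=
  forall c B, In (c, B) s -> 0 <= c /\ forall i, (i < m)%nat -> lo B i <= hi B i.

Definition step_val (m : nat) (s : step_fun) (x : nat -> R) : R :=
  fold_right (fun p acc => (if in_boxb m (snd p) x then fst p else 0) + acc) 0 s.

Definition step_int (m : nat) (s : step_fun) : R :=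
  fold_right (fun p acc => fst p * box_vol m (snd p) + acc) 0 s.

(* s lies below the integrand f = 1_{V_m}(x) / (x_1 ... x_m) on all of R^m,
   where f is taken to be +infinity at points of V_m with some x_i = 0. *)
Definition below_integrand (m : nat) (s : step_fun) : Prop :=
  forall x : nat -> R,
    (In_V m x -> prodR m x > 0 -> step_val m s x * prodR m x <= 1) /\
    (~ In_V m x -> step_val m s x <= 0).

(* The set of integrals of nonnegative step functions below the integrand;
   its supremum is the (lower Darboux / Lebesgue) integral of the
   nonnegative integrand over V_m. *)
Definition lower_sums (m : nat) (v : R) : Prop :=
  exists s : step_fun, step_valid m s /\ below_integrand m s /\ v = step_int m s.

Definition zeta_term (m : nat) (n : nat) : R := / (INR (S n)) ^ m.

From Stdlib Require Import Reals Arith.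
From Stdlib Require Import Lra Lia Psatz List Classical_Prop.
Open Scope R_scope.

(* Discretise at mesh [1/N].  If [x_1] lies in the cell [[(a-1)/N, a/N]], the
   constraint [x_1 + x_j >= 1] puts every [x_j] in a cell of index at least
   [N - a]; with [r = N - a] the integral is squeezed between tail sums
       [sum_{r<N} 1/(N-r) (H_N - H_{r + O(1)})^k]      ([H] harmonic numbers),
   which are realised by explicit step functions above and below the integrand.
   These sums are evaluated with the averaging operator
   [A w (r) = (w 0 + ... + w r)/(r+1)]: Abel summation gives
       [sum_r w r (H_N - H_r)^k = k! sum_r (A^k w) r + O((1 + H_N)^(k+1) / N)],
   and Newton's expansion of [1/(N-r)] in falling factorials gives exactly
   [sum_r A^k (r |-> 1/(N-r)) = sum_{n<=N} 1/n^(k+1)]. *)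

Fixpoint sumN (n : nat) (f : nat -> R) : R :=
  match n with O => 0 | S n' => sumN n' f + f n' end.

Lemma sumN_ext : forall n f g, (forall i, (i < n)%nat -> f i = g i) -> sumN n f = sumN n g.
Proof. induction n; intros f g H; simpl; auto. rewrite (IHn f g); [rewrite H|]; auto. Qed.

Lemma sumN_le : forall n f g, (forall i, (i < n)%nat -> f i <= g i) -> sumN n f <= sumN n g.
Proof.
  induction n; intros f g Hfg; simpl; [lra |].
  assert (IH := IHn f g (fun i Hi => Hfg i (Nat.lt_lt_succ_r _ _ Hi))).
  assert (Hn := Hfg n (Nat.lt_succ_diag_r n)). lra.
Qed.

Lemma sumN_nonneg : forall n f, (forall i, (i < n)%nat -> 0 <= f i) -> 0 <= sumN n f.
Proof. intros. replace 0 with (sumN n (fun _ => 0)). apply sumN_le; auto. induction n; simpl; auto. rewrite IHn; [lra|]. intros; apply H; lia. Qed.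

Lemma sumN_plus : forall n f g, sumN n (fun i => f i + g i) = sumN n f + sumN n g.
Proof. induction n; intros; simpl; [lra|]. rewrite IHn; lra. Qed.

Lemma sumN_minus : forall n f g, sumN n (fun i => f i - g i) = sumN n f - sumN n g.
Proof. induction n; intros; simpl; [lra|]. rewrite IHn; lra. Qed.

Lemma sumN_scal : forall n c f, sumN n (fun i => c * f i) = c * sumN n f.
Proof. induction n; intros; simpl; [lra|]. rewrite IHn; lra. Qed.

Lemma sumN_scalr : forall n c f, sumN n (fun i => f i * c) = sumN n f * c.
Proof. induction n; intros; simpl; [lra|]. rewrite IHn; lra. Qed.

Lemma sumN_shift : forall n f, sumN (S n) f = f O + sumN n (fun i => f (S i)).
Proof. induction n; intros; simpl in *; [lra|]. rewrite IHn. lra. Qed.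

Lemma sumN_split : forall a b f, sumN (a + b) f = sumN a f + sumN b (fun i => f (a + i)%nat).
Proof. intros a b; induction b; intros; simpl. rewrite Nat.add_0_r; lra.
 rewrite Nat.add_succ_r; simpl. rewrite IHb. lra. Qed.

Lemma sumN_exch : forall n p (f : nat -> nat -> R),
  sumN n (fun i => sumN p (fun j => f i j)) = sumN p (fun j => sumN n (fun i => f i j)).
Proof. induction n; intros; simpl. induction p; simpl; lra.
 rewrite IHn. rewrite <- sumN_plus. reflexivity. Qed.

Lemma sumN_const : forall n c, sumN n (fun _ => c) = INR n * c.
Proof. induction n; intros; simpl sumN; [simpl; lra|]. rewrite IHn, S_INR; lra. Qed.

Lemma sumN_ge_term : forall n f i0, (forall i, (i < n)%nat -> 0 <= f i) -> (i0 < n)%nat -> f i0 <= sumN n f.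
Proof. induction n; intros f i0 Hf Hi. lia. simpl. destruct (Nat.eq_dec i0 n). subst.
 assert (0 <= sumN n f) by (apply sumN_nonneg; intros; apply Hf; lia). lra.
 assert (f i0 <= sumN n f) by (apply (IHn f i0 (fun i Hi0 => Hf i ltac:(lia))); lia). assert (0 <= f n) by (apply Hf; lia). lra. Qed.

Lemma sumN_pos_ex : forall n f, 0 < sumN n f -> exists i, (i < n)%nat /\ 0 < f i.
Proof. induction n; intros f H; simpl in H. lra. destruct (Rlt_dec 0 (f n)). exists n; split; auto.
 destruct (IHn f ltac:(lra)) as [i [Hi Hfi]]. exists i; split; auto. Qed.

Lemma sum_atmost1 : forall n f, (forall i, (i < n)%nat -> 0 <= f i <= 1) ->
  (forall i j, (i < n)%nat -> (j < n)%nat -> f i <> 0 -> f j <> 0 -> i = j) -> sumN n f <= 1.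
Proof. induction n; intros f Hf Hu; simpl. lra. destruct (Req_dec (f n) 0) as [E|E].
 rewrite E. rewrite Rplus_0_r. apply IHn. intros; apply Hf; lia. intros; apply Hu; auto; lia.
 rewrite (sumN_ext _ _ (fun _ => 0)). rewrite sumN_const. assert (f n <= 1) by (apply Hf; lia). lra.
 intros i Hi. destruct (Req_dec (f i) 0); auto. exfalso. assert (i = n) by (apply Hu; auto; lia). lia. Qed.

Lemma mono_chain : forall N (v : nat -> R), (forall r, (S r < N)%nat -> v r <= v (S r)) ->
  forall a b, (a <= b)%nat -> (b < N)%nat -> v a <= v b.
Proof. intros N v Hv a b Hab; induction Hab; intros; [lra|].
 apply Rle_trans with (v m); [apply IHHab; lia| apply Hv; lia]. Qed.

Lemma abel_summation : forall n (w f : nat -> R),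
  sumN n (fun r => w r * f r) = sumN n (fun r => sumN (S r) w * (f r - f (S r))) + sumN n w * f n.
Proof. induction n; intros; simpl. ring. rewrite IHn. simpl. ring. Qed.

(* Stdlib's [sum_f_R0 f n] has [n + 1] terms. *)
Lemma sum_f_sumN : forall f n, sum_f_R0 f n = sumN (S n) f.
Proof. induction n; simpl. ring. rewrite IHn. simpl. ring. Qed.

Lemma prodR_ext : forall m f g, (forall i, (i < m)%nat -> f i = g i) -> prodR m f = prodR m g.
Proof. induction m; intros; simpl; auto. rewrite (IHm f g), H; auto. Qed.

Lemma prodR_S0 : forall n g, prodR (S n) g = g O * prodR n (fun i => g (S i)).
Proof. induction n; intros; simpl in *. ring. rewrite IHn. ring. Qed.

Lemma prodR_const : forall n c, prodR n (fun _ => c) = c ^ n.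
Proof. induction n; intros; simpl; auto. rewrite IHn. ring. Qed.

Lemma prodR_mult : forall n f g, prodR n (fun i => f i * g i) = prodR n f * prodR n g.
Proof. induction n; intros; simpl. ring. rewrite IHn. ring. Qed.

Lemma prodR_le : forall n f g, (forall i, (i < n)%nat -> 0 <= f i <= g i) -> prodR n f <= prodR n g.
Proof. induction n; intros; simpl. lra. assert (prodR n f <= prodR n g) by (apply IHn; intros; apply H; lia).
 assert (0 <= prodR n f). { clear IHn H0. induction n; simpl. lra. apply Rmult_le_pos. apply IHn; intros; apply H; lia. apply H; lia. }
 destruct (H n (Nat.lt_succ_diag_r n)). apply Rmult_le_compat; auto. Qed.

Lemma prodR_nonneg : forall n f, (forall i, (i < n)%nat -> 0 <= f i) -> 0 <= prodR n f.
Proof. induction n; intros; simpl. lra. apply Rmult_le_pos. apply IHn; intros; apply H; lia. apply H; lia. Qed.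

Lemma prodR_pos : forall n f, (forall i, (i < n)%nat -> 0 < f i) -> 0 < prodR n f.
Proof. induction n; intros; simpl. lra. apply Rmult_lt_0_compat. apply IHn; intros; apply H; lia. apply H; lia. Qed.

Lemma prodR_inv : forall n f, (forall i, (i < n)%nat -> f i <> 0) -> prodR n (fun i => / f i) = / prodR n f.
Proof. induction n; intros; simpl. field. rewrite IHn by (intros; apply H; lia). field. split. apply H; lia.
 clear IHn. induction n; simpl. lra. apply Rmult_integral_contrapositive; split. apply IHn; intros; apply H; lia. apply H; lia. Qed.

Lemma prodR_pos_each : forall n f, (forall i, (i < n)%nat -> 0 <= f i) -> 0 < prodR n f -> forall i, (i < n)%nat -> 0 < f i.
Proof. induction n; intros f Hf Hp i Hi. lia. simpl in Hp.
 assert (0 <= prodR n f) by (apply prodR_nonneg; intros; apply Hf; lia). assert (0 <= f n) by (apply Hf; lia).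
 assert (0 < prodR n f /\ 0 < f n).
 { split. destruct (Req_dec (prodR n f) 0) as [E|E]. rewrite E in Hp; lra. lra.
   destruct (Req_dec (f n) 0) as [E|E]. rewrite E in Hp; lra. lra. }
 destruct H1. destruct (Nat.eq_dec i n). subst; auto. apply (IHn f (fun i0 Hi0 => Hf i0 ltac:(lia)) H1 i). lia. Qed.

Lemma prodR_one_at : forall n i0 c, (i0 < n)%nat -> prodR n (fun i => if Nat.eq_dec i i0 then c else 1) = c.
Proof. induction n; intros. lia. simpl. destruct (Nat.eq_dec n i0).
 subst i0. rewrite (prodR_ext _ _ (fun _ => 1)). rewrite prodR_const, pow1. ring. intros i Hi; destruct (Nat.eq_dec i n); [lia|auto].
 rewrite IHn by lia. ring. Qed.

Lemma pow_diff_up : forall j X Y, 0 <= Y <= X -> X ^ S j - Y ^ S j <= INR (S j) * (X - Y) * X ^ j.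
Proof. induction j; intros X Y HXY. simpl. lra.
 change (X ^ S (S j)) with (X * X ^ S j). change (Y ^ S (S j)) with (Y * Y ^ S j).
 assert (IH := IHj X Y HXY). assert (0 <= Y ^ S j <= X ^ S j) by (split; [apply pow_le; lra| apply pow_incr; lra]).
 rewrite (S_INR (S j)). change (X ^ S j) with (X * X ^ j) in *.
 assert (0 <= X ^ j) by (apply pow_le; lra).
 replace (X * (X * X ^ j) - Y * Y ^ S j) with (X * (X * X ^ j - Y ^ S j) + (X - Y) * Y ^ S j) by ring.
 assert (X * (X * X ^ j - Y ^ S j) <= X * (INR (S j) * (X - Y) * X ^ j)) by (apply Rmult_le_compat_l; lra).
 assert ((X - Y) * Y ^ S j <= (X - Y) * (X * X ^ j)) by (apply Rmult_le_compat_l; lra).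
 lra. Qed.

Lemma pow_diff_lo : forall j X Y, 0 <= Y <= X -> X ^ S j - Y ^ S j >= INR (S j) * (X - Y) * Y ^ j.
Proof. induction j; intros X Y HXY. simpl. lra.
 change (X ^ S (S j)) with (X * X ^ S j). change (Y ^ S (S j)) with (Y * Y ^ S j).
 assert (IH := IHj X Y HXY). assert (0 <= Y ^ S j <= X ^ S j) by (split; [apply pow_le; lra| apply pow_incr; lra]).
 rewrite (S_INR (S j)). change (Y ^ S j) with (Y * Y ^ j) in *.
 assert (0 <= Y ^ j) by (apply pow_le; lra).
 replace (X * X ^ S j - Y * (Y * Y ^ j)) with (Y * (X ^ S j - Y * Y ^ j) + (X - Y) * X ^ S j) by ring.
 assert (Y * (X ^ S j - Y * Y ^ j) >= Y * (INR (S j) * (X - Y) * Y ^ j)) by (apply Rle_ge, Rmult_le_compat_l; lra).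
 assert ((X - Y) * X ^ S j >= (X - Y) * (Y * Y ^ j)) by (apply Rle_ge, Rmult_le_compat_l; lra).
 lra. Qed.

Lemma bernoulli : forall n x, 0 <= x <= 1 -> 1 - INR n * x <= (1 - x) ^ n.
Proof. induction n; intros x Hx. simpl. lra. rewrite S_INR. simpl pow.
 assert (IH := IHn x Hx). assert (0 <= INR n) by apply pos_INR. assert (0 <= (1 - x) ^ n) by (apply pow_le; lra). nra. Qed.

Lemma INR_S_pos : forall i, 0 < INR (S i).
Proof. intros; apply lt_0_INR; lia. Qed.

Definition harm (n : nat) : R := sumN n (fun i => / INR (S i)).

Definition harm_pow (p n : nat) : R := sumN n (fun i => / (INR (S i)) ^ p).

Lemma harm_S : forall n, harm (S n) = harm n + / INR (S n).
Proof. reflexivity. Qed.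

Lemma harm_nonneg : forall n, 0 <= harm n.
Proof. intros; apply sumN_nonneg; intros; left; apply Rinv_0_lt_compat, INR_S_pos. Qed.

Lemma harm_mono : forall a b, (a <= b)%nat -> harm a <= harm b.
Proof. intros a b Hab; induction Hab; [lra|]. rewrite harm_S. assert (0 < / INR (S m)) by (apply Rinv_0_lt_compat, INR_S_pos). lra. Qed.

Lemma harm_pow_1 : forall N, harm_pow 1 N = harm N.
Proof. intros. unfold harm_pow, harm. apply sumN_ext. intros. rewrite pow_1. reflexivity. Qed.

Lemma harm_diff2 : forall r, harm r - harm (r - 2) <= 6 / INR (S r).
Proof. intros [|[|r]]. simpl. unfold Rdiv. assert (0 < / INR 1) by (apply Rinv_0_lt_compat; apply INR_S_pos). lra.
 simpl (1 - 2)%nat. unfold harm. simpl sumN. simpl INR. lra.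
 replace (S (S r) - 2)%nat with r by lia. rewrite !harm_S. rewrite !S_INR.
 assert (0 <= INR r) by apply pos_INR.
 assert (/ (INR r + 1) <= 3 / (INR r + 1 + 1 + 1)) by (apply Rmult_le_reg_r with ((INR r + 1)*(INR r + 1 + 1 + 1)); [nra| field_simplify; lra]).
 assert (/ (INR r + 1 + 1) <= 3 / (INR r + 1 + 1 + 1)) by (apply Rmult_le_reg_r with ((INR r + 1 + 1)*(INR r + 1 + 1 + 1)); [nra| field_simplify; lra]).
 lra. Qed.

Lemma harm_double : forall n, harm (2 ^ S n) <= harm (2 ^ n) + 1.
Proof. intros. replace (2 ^ S n)%nat with (2 ^ n + 2 ^ n)%nat by (simpl; lia). unfold harm at 1. rewrite sumN_split. fold (harm (2 ^ n)).
 assert (sumN (2 ^ n) (fun i => / INR (S (2 ^ n + i))) <= sumN (2 ^ n) (fun _ => / INR (2 ^ n))).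
 { apply sumN_le. intros. apply Rinv_le_contravar. apply lt_0_INR. apply Nat.neq_0_lt_0, Nat.pow_nonzero; lia. apply le_INR; lia. }
 rewrite sumN_const in H. assert (0 < INR (2 ^ n)) by (apply lt_0_INR, Nat.neq_0_lt_0, Nat.pow_nonzero; lia).
 rewrite Rinv_r in H by lra. lra. Qed.

Lemma harm_pow2 : forall n, harm (2 ^ n) <= 1 + INR n.
Proof. induction n. simpl. unfold harm; simpl. lra. assert (Hd := harm_double n). rewrite S_INR. lra. Qed.

Lemma pow2_ge : forall t, INR t + 1 <= 2 ^ t.
Proof. induction t. simpl; lra. rewrite S_INR. simpl. assert (1 <= 2 ^ t) by (apply pow_R1_Rle; lra). lra. Qed.

Definition disc_error (N p : nat) : R := (1 + harm N) ^ p / INR N.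

Lemma disc_error_ge (N p : nat) : (0 < N)%nat -> / INR N <= disc_error N p.
Proof.
  intros HN. unfold disc_error, Rdiv.
  assert (HNp : 0 < / INR N) by (apply Rinv_0_lt_compat, lt_0_INR; exact HN).
  assert (Hp : 1 <= (1 + harm N) ^ p) by (apply pow_R1_Rle; generalize (harm_nonneg N); lra).
  nra.
Qed.

Lemma error_term_small : forall p eps N1, 0 < eps -> exists N, (N1 <= N)%nat /\ (2 <= N)%nat /\ disc_error N p < eps.
Proof. intros p eps N1 Heps. unfold disc_error. set (c := (INR p + 3) ^ p).
 assert (Hc : 0 < c) by (unfold c; apply pow_lt; assert (0 <= INR p) by apply pos_INR; lra).
 destruct (INR_unbounded (c / eps + INR N1 + 1)) as [t Ht].
 exists (2 ^ (S p * t))%nat.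
 assert (HN : INR (2 ^ (S p * t)) = (2 ^ t) ^ S p) by (rewrite pow_INR, <- pow_mult; simpl INR; f_equal; lia).
 assert (Ht1 : INR t + 1 <= 2 ^ t) by apply pow2_ge.
 assert (0 <= INR t) by apply pos_INR. assert (0 <= INR N1) by apply pos_INR.
 assert (Hbig : INR N1 + 2 <= INR (2 ^ (S p * t))).
 { rewrite HN. apply Rle_trans with (2 ^ t). 2:{ rewrite <- (pow_1 (2 ^ t)) at 1. apply Rle_pow. apply pow_R1_Rle; lra. lia. }
   assert (c / eps >= 0) by (unfold Rdiv; apply Rle_ge, Rmult_le_pos; [lra| left; apply Rinv_0_lt_compat; lra]). lra. }
 split; [|split].
 - apply INR_le. assert (INR N1 <= INR (2 ^ (S p * t))) by lra. auto.
 - apply INR_le. simpl (INR 2). lra.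
 - assert (HH : 1 + harm (2 ^ (S p * t)) <= (INR p + 3) * (INR t + 1)).
   { assert (E := harm_pow2 (S p * t)). rewrite mult_INR, S_INR in E. assert (0 <= INR p) by apply pos_INR. nra. }
   assert (0 <= harm (2 ^ (S p * t))) by apply harm_nonneg.
   assert (Hpow : (1 + harm (2 ^ (S p * t))) ^ p <= c * (INR t + 1) ^ p).
   { unfold c. rewrite <- Rpow_mult_distr. apply pow_incr. lra. }
   assert (HNge : (INR t + 1) ^ S p <= INR (2 ^ (S p * t))) by (rewrite HN; apply pow_incr; lra).
   assert (0 < (INR t + 1) ^ p) by (apply pow_lt; lra).
   apply Rle_lt_trans with (c * (INR t + 1) ^ p / (INR t + 1) ^ S p).
   + unfold Rdiv. apply Rmult_le_compat; try lra. apply pow_le; lra. left; apply Rinv_0_lt_compat. apply Rlt_le_trans with ((INR t + 1) ^ S p); auto. apply pow_lt; lra.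
     apply Rinv_le_contravar; auto. apply pow_lt; lra.
   + simpl pow. replace (c * (INR t + 1) ^ p / ((INR t + 1) * (INR t + 1) ^ p)) with (c / (INR t + 1)) by (field; lra).
     apply Rmult_lt_reg_r with (INR t + 1). lra. unfold Rdiv. rewrite Rmult_assoc, Rinv_l, Rmult_1_r by lra.
     assert (c < eps * (INR t + 1)).
     { assert (c / eps < INR t) by lra. apply Rmult_lt_reg_r with (/ eps). apply Rinv_0_lt_compat; lra.
       replace (eps * (INR t + 1) * / eps) with (INR t + 1) by (field; lra). unfold Rdiv in H2. lra. }
     lra. Qed.

(* The partial sums of [1/n^2] are bounded (telescoping against [1/(n(n+1))]). *)
Lemma harm_pow_2_bound : forall n, sumN (S n) (fun i => / INR (S i) ^ 2) <= 2 - / INR (S n).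
Proof. induction n. simpl. lra.
 change (sumN (S (S n)) (fun i => / INR (S i) ^ 2)) with (sumN (S n) (fun i => / INR (S i) ^ 2) + / INR (S (S n)) ^ 2).
 rewrite (S_INR (S n)). assert (0 < INR (S n)) by apply INR_S_pos. set (a := INR (S n)) in *.
 assert (/ (a + 1) ^ 2 <= / a - / (a + 1)).
 { replace (/ a - / (a + 1)) with (/ (a * (a + 1))) by (field; lra).
   apply Rinv_le_contravar. nra. simpl; nra. }
 lra. Qed.

Lemma zeta_conv : forall k', exists z, infinite_sum (zeta_term (S (S k'))) z /\
  (forall N, harm_pow (S (S k')) N <= z) /\
  (forall eps, 0 < eps -> exists N0, forall N, (N0 <= N)%nat -> z - eps < harm_pow (S (S k')) N).
Proof. intros k'. set (m := S (S k')). set (u := sum_f_R0 (zeta_term m)).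
 assert (Hterm : forall n, 0 <= zeta_term m n) by (intros; unfold zeta_term; left; apply Rinv_0_lt_compat, pow_lt, INR_S_pos).
 assert (Hg : Un_growing u) by (intros n; unfold u; simpl; specialize (Hterm (S n)); lra).
 assert (Hub : has_ub u).
 { exists 2. intros y [n E]. subst y. unfold u. rewrite sum_f_sumN. apply Rle_trans with (2 - / INR (S n)).
   apply Rle_trans with (sumN (S n) (fun i => / INR (S i) ^ 2)); [|apply harm_pow_2_bound].
   apply sumN_le. intros i Hi. unfold zeta_term. apply Rinv_le_contravar. apply pow_lt, INR_S_pos.
   apply Rle_pow. apply (le_INR 1); lia. unfold m; lia.
   assert (0 < / INR (S n)) by (apply Rinv_0_lt_compat, INR_S_pos). lra. }
 destruct (growing_cv u Hg Hub) as [z Hz]. exists z.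
 assert (HpU : forall N, harm_pow m (S N) = u N) by (intros; unfold u; rewrite sum_f_sumN; reflexivity).
 split; [|split].
 - intros eps Heps. destruct (Hz eps Heps) as [N0 HN0]. exists N0. intros n Hn. apply HN0; auto.
 - intros N. destruct N. unfold harm_pow; simpl. apply Rle_trans with (u O). unfold u; simpl; apply Hterm. apply growing_ineq; auto.
   rewrite HpU. apply growing_ineq; auto.
 - intros eps Heps. destruct (Hz eps Heps) as [N0 HN0]. exists (S N0). intros N HN. destruct N; [lia|].
   rewrite HpU. specialize (HN0 N ltac:(lia)). unfold Rdist in HN0. apply Rabs_def2 in HN0. lra. Qed.

Fixpoint falling (x : R) (j : nat) : R := match j with O => 1 | S j' => x * falling (x - 1) j' end.

Lemma falling_diff : forall j x, falling (x + 1) (S j) - falling x (S j) = INR (S j) * falling x j.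
Proof. induction j; intros x. simpl. lra.
 change (falling (x + 1) (S (S j))) with ((x+1) * falling (x + 1 - 1) (S j)).
 change (falling x (S (S j))) with (x * falling (x - 1) (S j)).
 replace (x + 1 - 1) with x by ring.
 assert (IH := IHj (x - 1)). replace (x - 1 + 1) with x in IH by ring.
 change (falling x (S j)) with (x * falling (x - 1) j) in *.
 rewrite (S_INR (S j)). rewrite S_INR in IH.
 assert (HG : falling (x - 1) (S j) = x * falling (x - 1) j - (INR j + 1) * falling (x - 1) j) by lra.
 rewrite HG, S_INR. ring. Qed.

Lemma falling_hockey : forall j r, sumN r (fun i => falling (INR i) j) = falling (INR r) (S j) / INR (S j).
Proof. intros j r; induction r. simpl. unfold Rdiv; ring.
 simpl sumN. rewrite IHr. rewrite (S_INR r). assert (Hd := falling_diff j (INR r)).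
 assert (0 < INR (S j)) by apply INR_S_pos.
 replace (falling (INR r + 1) (S j)) with (falling (INR r) (S j) + INR (S j) * falling (INR r) j) by lra.
 field. lra. Qed.

Lemma falling_S_INR : forall r j, falling (INR (S r)) (S j) = INR (S r) * falling (INR r) j.
Proof. intros. change (falling (INR (S r)) (S j)) with (INR (S r) * falling (INR (S r) - 1) j). rewrite S_INR. replace (INR r + 1 - 1) with (INR r) by ring. reflexivity. Qed.

Lemma falling_neq0 : forall M j, (j <= M)%nat -> falling (INR M) j <> 0.
Proof. induction M; intros j Hj. assert (j = O) by lia; subst; simpl; lra.
 destruct j. simpl; lra. rewrite falling_S_INR. apply Rmult_integral_contrapositive; split.
 apply not_0_INR; lia. apply IHM; lia. Qed.

Lemma falling_0 : forall j, falling 0 (S j) = 0.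
Proof. intros; simpl; ring. Qed.

Lemma newton_series : forall r M, (r <= M)%nat ->
  sumN (S M) (fun j => falling (INR r) j / falling (INR M) j) = INR (S M) / (INR (S M) - INR r).
Proof. induction r; intros M HrM.
 - rewrite sumN_shift. rewrite (sumN_ext _ _ (fun _ => 0)).
   2:{ intros; simpl INR at 1; rewrite falling_0; unfold Rdiv; ring. }
   rewrite sumN_const. simpl falling. simpl INR at 4. assert (0 < INR (S M)) by apply INR_S_pos. field. lra.
 - destruct M as [|M]; [lia|]. rewrite sumN_shift.
   rewrite (sumN_ext _ _ (fun j => (INR (S r) / INR (S M)) * (falling (INR r) j / falling (INR M) j))).
   2:{ intros j Hj. rewrite !falling_S_INR. field. split. apply falling_neq0; lia. apply not_0_INR; lia. }
   rewrite sumN_scal. rewrite IHr by lia.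
   change (falling (INR (S r)) 0) with 1; change (falling (INR (S M)) 0) with 1.
   assert (INR r <= INR M) by (apply le_INR; lia).
   rewrite (S_INR (S M)), (S_INR M), (S_INR r). assert (0 <= INR r) by apply pos_INR. field. split; lra. Qed.

Definition weight (N r : nat) : R := / (INR N - INR r).

Definition avg (w : nat -> R) (r : nat) : R := sumN (S r) w / INR (S r).

Fixpoint avg_iter (j : nat) (w : nat -> R) : nat -> R :=
  match j with O => w | S j' => avg_iter j' (avg w) end.

(* Ratios of falling factorials, and the series through which the iterated
   averages of [weight (M+1)] are computed in closed form. *)
Definition fratio (M j r : nat) : R := falling (INR r) j / falling (INR M) j.

Definition fratio_series (M k r : nat) : R := / INR (S M) * sumN (S M) (fun j => fratio M j r / INR (S j) ^ k).

Lemma avg_fratio : forall M j r, avg (fratio M j) r = fratio M j r / INR (S j).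
Proof. intros. unfold avg, fratio. unfold Rdiv at 1.
 rewrite (sumN_ext _ _ (fun i => falling (INR i) j * / falling (INR M) j)) by (intros; reflexivity).
 rewrite sumN_scalr. rewrite falling_hockey. rewrite falling_S_INR.
 assert (0 < INR (S r)) by apply INR_S_pos. assert (0 < INR (S j)) by apply INR_S_pos.
 unfold Rdiv.
 replace (INR (S r) * falling (INR r) j * / INR (S j) * / falling (INR M) j * / INR (S r)) with ((INR (S r) * / INR (S r)) * (falling (INR r) j * / falling (INR M) j * / INR (S j))) by ring.
 rewrite Rinv_r by lra. ring. Qed.

Lemma avg_fratio_series : forall M k r, avg (fratio_series M k) r = fratio_series M (S k) r.
Proof. intros. unfold avg, fratio_series. rewrite sumN_scal. rewrite sumN_exch.
 assert (0 < INR (S r)) by apply INR_S_pos.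
 rewrite (sumN_ext (S M) (fun j => fratio M j r / INR (S j) ^ S k)
           (fun j => sumN (S r) (fun i => fratio M j i / INR (S j) ^ k) / INR (S r))).
 - unfold Rdiv. rewrite sumN_scalr. ring.
 - intros j Hj. assert (0 < INR (S j)) by apply INR_S_pos.
   assert (0 < INR (S j) ^ k) by (apply pow_lt; lra).
   replace (fratio M j r / INR (S j) ^ S k) with ((fratio M j r / INR (S j)) / INR (S j) ^ k) by (change (INR (S j) ^ S k) with (INR (S j) * INR (S j) ^ k); field; split; lra).
   rewrite <- (avg_fratio M j r). unfold avg. unfold Rdiv.
   rewrite sumN_scalr. ring. Qed.

Lemma avg_ext : forall M w v, (forall r, (r <= M)%nat -> w r = v r) ->
  forall r, (r <= M)%nat -> avg w r = avg v r.
Proof. intros. unfold avg. rewrite (sumN_ext _ w v); auto. intros; apply H; lia. Qed.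

Lemma avg_iter_fratio_series : forall M k w i, (forall r, (r <= M)%nat -> w r = fratio_series M i r) ->
  forall r, (r <= M)%nat -> avg_iter k w r = fratio_series M (i + k) r.
Proof. intros M k; induction k; intros w i Hw r Hr; simpl. rewrite Nat.add_0_r; auto.
 rewrite (IHk (avg w) (S i)). rewrite Nat.add_succ_r. reflexivity.
 intros r' Hr'. rewrite <- avg_fratio_series. apply (avg_ext M); auto. auto. Qed.

Lemma weight_fratio_series : forall M r, (r <= M)%nat -> weight (S M) r = fratio_series M 0 r.
Proof. intros. unfold fratio_series, weight. 
 rewrite (sumN_ext _ _ (fun j => falling (INR r) j / falling (INR M) j)) by (intros; unfold fratio; simpl; field; apply falling_neq0; lia).
 rewrite newton_series by auto. assert (INR r <= INR M) by (apply le_INR; lia). rewrite (S_INR M).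
 assert (0 <= INR r) by apply pos_INR. field. split; lra. Qed.

Lemma sum_avg_iter_weight : forall M k, sumN (S M) (avg_iter k (weight (S M))) = harm_pow (S k) (S M).
Proof. intros. rewrite (sumN_ext _ _ (fratio_series M k)).
 2:{ intros. apply (avg_iter_fratio_series M k _ 0). intros; apply weight_fratio_series; auto. lia. }
 unfold fratio_series. rewrite sumN_scal. rewrite sumN_exch. unfold harm_pow. rewrite <- sumN_scal.
 apply sumN_ext. intros j Hj.
 rewrite (sumN_ext _ _ (fun i => falling (INR i) j * (/ falling (INR M) j / INR (S j) ^ k))) by (intros; unfold fratio; unfold Rdiv; ring).
 rewrite sumN_scalr. rewrite falling_hockey, falling_S_INR.
 assert (falling (INR M) j <> 0) by (apply falling_neq0; lia). assert (0 < INR (S j)) by apply INR_S_pos.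
 assert (0 < INR (S M)) by apply INR_S_pos. assert (0 < INR (S j) ^ k) by (apply pow_lt; lra).
 change (INR (S j) ^ S k) with (INR (S j) * INR (S j) ^ k). field. repeat split; lra. Qed.

Lemma weight_pos : forall N r, (r < N)%nat -> 0 < weight N r.
Proof. intros. unfold weight. apply Rinv_0_lt_compat. assert (INR r < INR N) by (apply lt_INR; lia). lra. Qed.

Definition tail_pow (N j r : nat) : R := (harm N - harm r) ^ j.

Lemma avg_nonneg_lt : forall N w, (forall r, (r < N)%nat -> 0 <= w r) -> forall r, (r < N)%nat -> 0 <= avg w r.
Proof. intros. unfold avg, Rdiv. apply Rmult_le_pos. apply sumN_nonneg; intros; apply H; lia. left; apply Rinv_0_lt_compat, INR_S_pos. Qed.

(* Upper comparison: [sum_r w r (harm N - harm r)^j <= j! sum_r avg^j w r] for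
   nonnegative [w] (Abel summation and the mean value bound, by induction on [j]). *)
Lemma tail_sum_le : forall N j w, (forall r, (r < N)%nat -> 0 <= w r) ->
  sumN N (fun r => w r * tail_pow N j r) <= INR (fact j) * sumN N (avg_iter j w).
Proof. intros N j; induction j; intros w Hw.
 - simpl. unfold tail_pow. simpl. rewrite (sumN_ext _ _ w) by (intros; ring). lra.
 - rewrite abel_summation. replace (tail_pow N (S j) N) with 0 by (unfold tail_pow; rewrite Rminus_diag; simpl; ring). rewrite Rmult_0_r, Rplus_0_r.
   apply Rle_trans with (sumN N (fun r => INR (S j) * (avg w r * tail_pow N j r))).
   + apply sumN_le. intros r Hr. unfold tail_pow.
     assert (HH : harm r <= harm (S r) <= harm N) by (split; apply harm_mono; lia).
     assert (Hd := pow_diff_up j (harm N - harm r) (harm N - harm (S r)) ltac:(lra)).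
     rewrite harm_S in *. unfold avg.
     assert (0 <= sumN (S r) w) by (apply sumN_nonneg; intros; apply Hw; lia). assert (0 < INR (S r)) by apply INR_S_pos.
     replace (harm N - harm r - (harm N - (harm r + / INR (S r)))) with (/ INR (S r)) in Hd by ring.
     apply Rle_trans with (sumN (S r) w * (INR (S j) * / INR (S r) * (harm N - harm r) ^ j)).
     apply Rmult_le_compat_l; lra. unfold Rdiv. lra.
   + rewrite sumN_scal. simpl avg_iter. assert (IH := IHj (avg w) (avg_nonneg_lt N w Hw)).
     rewrite fact_simpl, mult_INR. assert (0 <= INR (S j)) by apply pos_INR.
     assert (INR (S j) * sumN N (fun r => avg w r * tail_pow N j r) <= INR (S j) * (INR (fact j) * sumN N (avg_iter j (avg w)))) by (apply Rmult_le_compat_l; lra).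
     lra. Qed.

Lemma avg_monotone : forall N v, (forall r, (r < N)%nat -> 0 <= v r) ->
  (forall r, (S r < N)%nat -> v r <= v (S r)) ->
  (forall r, (r < N)%nat -> 0 <= avg v r) /\ (forall r, (S r < N)%nat -> avg v r <= avg v (S r))
  /\ (forall r, (r < N)%nat -> avg v r <= v r).
Proof. intros N v H H0.
 assert (Hle : forall r, (r < N)%nat -> sumN (S r) v <= INR (S r) * v r).
 { intros. rewrite <- sumN_const. apply sumN_le. intros. apply (mono_chain N); auto; lia. }
 assert (Hnn : forall r, (r < N)%nat -> 0 <= sumN (S r) v) by (intros; apply sumN_nonneg; intros; apply H; lia).
 split; [|split].
 - intros. unfold avg, Rdiv. apply Rmult_le_pos; auto. left; apply Rinv_0_lt_compat, INR_S_pos.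
 - intros r Hr. unfold avg. change (sumN (S (S r)) v) with (sumN (S r) v + v (S r)).
   assert (Hs := Hle r ltac:(lia)). assert (Hm := H0 r Hr). assert (Hn := Hnn r ltac:(lia)).
   rewrite (S_INR (S r)). assert (0 < INR (S r)) by apply INR_S_pos.
   apply Rmult_le_reg_r with (INR (S r) * (INR (S r) + 1)). nra.
   unfold Rdiv. field_simplify; try lra. nra.
 - intros r Hr. unfold avg. assert (Hs := Hle r Hr). assert (0 < INR (S r)) by apply INR_S_pos.
   apply Rmult_le_reg_r with (INR (S r)). lra. unfold Rdiv. rewrite Rmult_assoc, Rinv_l by lra. lra.
Qed.

Lemma avg_iter_bounded : forall N i v, (forall r, (r < N)%nat -> 0 <= v r) ->
  (forall r, (S r < N)%nat -> v r <= v (S r)) -> (forall r, (r < N)%nat -> v r <= weight N r) ->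
  forall r, (r < N)%nat -> 0 <= avg_iter i v r <= weight N r.
Proof. intros N i; induction i; intros v H H0 H1 r Hr; simpl. split; auto.
 destruct (avg_monotone N v H H0) as [A0 [A1 A2]]. apply IHi; auto.
 intros; apply Rle_trans with (v r0); auto. Qed.

Lemma avg_iter_weight_bounded : forall N i r, (r < N)%nat -> 0 <= avg_iter i (weight N) r <= weight N r.
Proof. intros. apply avg_iter_bounded; auto.
 - intros; left; apply weight_pos; auto.
 - intros r0 Hr0. unfold weight. assert (INR (S r0) < INR N) by (apply lt_INR; lia). rewrite S_INR in *.
   apply Rinv_le_contravar; lra.
 - intros; lra. Qed.

Definition log_pow (N k : nat) : R := (1 + harm N) ^ k.

Definition weight_harm_sum (N : nat) : R := sumN N (fun r => weight N r / INR (S r)).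

Lemma tail_pow_nonneg : forall N j r, (r <= N)%nat -> 0 <= tail_pow N j r.
Proof. intros. unfold tail_pow. apply pow_le. assert (harm r <= harm N) by (apply harm_mono; auto). lra. Qed.

Lemma log_pow_ge1 : forall N k, 1 <= log_pow N k.
Proof. intros. unfold log_pow. apply pow_R1_Rle. assert (0 <= harm N) by apply harm_nonneg. lra. Qed.

Lemma weight_harm_sum_nonneg : forall N, 0 <= weight_harm_sum N.
Proof. intros. apply sumN_nonneg. intros. unfold Rdiv. apply Rmult_le_pos. left; apply weight_pos; auto.
 left; apply Rinv_0_lt_compat, INR_S_pos. Qed.

Lemma tail_pow_step : forall N k j r, (j <= k)%nat -> (r < N)%nat ->
  tail_pow N j r - tail_pow N j (S r) <= INR j * log_pow N k / INR (S r).
Proof. intros N k j r Hj Hr. destruct j as [|j].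
 - unfold tail_pow. simpl. unfold Rdiv. rewrite Rmult_0_l, Rmult_0_l. lra.
 - unfold tail_pow. assert (HH : harm r <= harm (S r) <= harm N) by (split; apply harm_mono; lia).
   assert (Hd := pow_diff_up j (harm N - harm r) (harm N - harm (S r)) ltac:(lra)).
   rewrite harm_S in *. assert (0 < INR (S r)) by apply INR_S_pos.
   replace (harm N - harm r - (harm N - (harm r + / INR (S r)))) with (/ INR (S r)) in Hd by ring.
   assert (0 <= harm r) by apply harm_nonneg.
   assert (Hx : (harm N - harm r) ^ j <= log_pow N k).
   { unfold log_pow. apply Rle_trans with ((1 + harm N) ^ j). apply pow_incr; lra.
     apply Rle_pow. assert (0 <= harm N) by apply harm_nonneg. lra. lia. }
   assert (0 <= INR (S j)) by apply pos_INR.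
   assert (0 < / INR (S r)) by (apply Rinv_0_lt_compat; lra).
   apply Rle_trans with (INR (S j) * / INR (S r) * (harm N - harm r) ^ j). lra.
   unfold Rdiv. rewrite (Rmult_comm (INR (S j) * log_pow N k)). rewrite <- Rmult_assoc.
   rewrite (Rmult_comm _ (INR (S j))). apply Rmult_le_compat_l. nra. auto. Qed.

Lemma tail_sum_ge_term (N k j r : nat) (w : nat -> R) :
  (S j <= k)%nat -> (r < N)%nat -> (forall i, (i <= r)%nat -> 0 <= w i) -> avg w r <= weight N r ->
  INR (S j) * (avg w r * tail_pow N j r) - INR (S j) * INR j * log_pow N k * (weight N r / INR (S r))
    <= sumN (S r) w * (tail_pow N (S j) r - tail_pow N (S j) (S r)).
Proof.
  intros Hj Hr Hw HA. unfold tail_pow.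
  assert (HH : harm r <= harm (S r) <= harm N) by (split; apply harm_mono; lia).
  assert (Hd := pow_diff_lo j (harm N - harm r) (harm N - harm (S r)) ltac:(lra)).
  assert (Hpd := tail_pow_step N k j r ltac:(lia) Hr). unfold tail_pow in Hpd.
  rewrite harm_S in *. unfold avg in *.
  assert (0 <= sumN (S r) w) by (apply sumN_nonneg; intros; apply Hw; lia).
  assert (0 < INR (S r)) by apply INR_S_pos.
  replace (harm N - harm r - (harm N - (harm r + / INR (S r)))) with (/ INR (S r)) in Hd by ring.
  set (X := (harm N - harm r) ^ j) in *. set (Y := (harm N - (harm r + / INR (S r))) ^ j) in *.
  set (Wr := sumN (S r) w) in *.
  assert (0 <= INR j) by apply pos_INR. assert (0 <= log_pow N k) by (generalize (log_pow_ge1 N k); lra).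
  assert (0 < INR (S j)) by apply INR_S_pos.
  apply Rle_trans with (Wr * (INR (S j) * / INR (S r) * Y)).
  - unfold Rdiv in *.
    assert (Wr * / INR (S r) * (X - INR j * log_pow N k * / INR (S r)) <= Wr * / INR (S r) * Y).
    { apply Rmult_le_compat_l; [apply Rmult_le_pos; [lra | left; apply Rinv_0_lt_compat; lra] | lra]. }
    assert (INR (S j) * INR j * log_pow N k * (Wr * / INR (S r)) * / INR (S r)
            <= INR (S j) * INR j * log_pow N k * weight N r * / INR (S r)).
    { apply Rmult_le_compat_r; [left; apply Rinv_0_lt_compat; lra |].
      apply Rmult_le_compat_l; [apply Rmult_le_pos; [apply Rmult_le_pos |] |]; lra. }
    nra.
  - apply Rmult_le_compat_l; lra.
Qed.

Lemma tail_sum_ge : forall N k j, (j <= k)%nat -> forall w, (forall i r, (r < N)%nat -> 0 <= avg_iter i w r <= weight N r) ->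
  sumN N (fun r => w r * tail_pow N j r) >= INR (fact j) * sumN N (avg_iter j w) - INR (fact j) * INR (j * j) * log_pow N k * weight_harm_sum N.
Proof.
  intros N k j; induction j; intros Hj w Hw.
  - simpl. unfold tail_pow. simpl. rewrite (sumN_ext _ _ w) by (intros; ring). lra.
  - rewrite abel_summation.
    replace (tail_pow N (S j) N) with 0 by (unfold tail_pow; rewrite Rminus_diag; simpl; ring).
    rewrite Rmult_0_r, Rplus_0_r.
    assert (GB : 0 <= log_pow N k * weight_harm_sum N)
      by (apply Rmult_le_pos; [generalize (log_pow_ge1 N k); lra | apply weight_harm_sum_nonneg]).
    apply Rge_trans with (sumN N (fun r => INR (S j) * (avg w r * tail_pow N j r)
                              - INR (S j) * INR j * log_pow N k * (weight N r / INR (S r)))).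
    + apply Rle_ge, sumN_le. intros r Hr. apply tail_sum_ge_term; auto.
      * intros i Hi. apply (Hw O); lia.
      * exact (proj2 (Hw 1%nat r Hr)).
    + rewrite sumN_minus, !sumN_scal. fold (weight_harm_sum N). simpl avg_iter.
      assert (IH := IHj ltac:(lia) (avg w) (fun i r Hr => Hw (S i) r Hr)).
      rewrite fact_simpl, !mult_INR.
      set (F := INR (fact j)) in *. set (J := INR j) in *. set (Sg := sumN N (avg_iter j (avg w))) in *.
      set (T := sumN N (fun r => avg w r * tail_pow N j r)) in *.
      assert (F1 : 1 <= F) by (unfold F; apply (le_INR 1); apply lt_O_fact).
      assert (0 <= J) by apply pos_INR. rewrite S_INR. fold J. rewrite mult_INR in IH. fold J in IH.
      set (g := log_pow N k) in *. set (b := weight_harm_sum N) in *.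
      assert (Hk : 0 <= (J + 1) * (T - (F * Sg - F * (J * J) * g * b))) by (apply Rmult_le_pos; lra).
      assert (Hk2 : 0 <= (J + 1) * (F * (2 * J + 1) - J) * (g * b)) by (apply Rmult_le_pos; [apply Rmult_le_pos; nra | lra]).
      apply Rminus_ge.
      replace ((J + 1) * T - (J + 1) * J * g * b - ((J + 1) * F * Sg - (J + 1) * F * ((J + 1) * (J + 1)) * g * b))
        with ((J + 1) * (T - (F * Sg - F * (J * J) * g * b)) + (J + 1) * (F * (2 * J + 1) - J) * (g * b)) by ring.
      lra.
Qed.

(* Partial fractions give [weight_harm_sum (M+1) = 2 harm (M+1) / (M+2)]. *)
Lemma weight_harm_sum_eq : forall M, weight_harm_sum (S M) = 2 * harm (S M) / INR (S (S M)).
Proof. intros. unfold weight_harm_sum.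
 rewrite (sumN_ext _ _ (fun r => / INR (S (S M)) * (weight (S M) r + / INR (S r)))).
 - rewrite sumN_scal, sumN_plus. fold (harm (S M)).
   assert (E := sum_avg_iter_weight M 0). simpl avg_iter in E. rewrite E, harm_pow_1. assert (0 < INR (S (S M))) by apply INR_S_pos.
   field. lra.
 - intros r Hr. unfold weight. assert (INR r < INR (S M)) by (apply lt_INR; lia). rewrite (S_INR (S M)), (S_INR r).
   assert (0 <= INR r) by apply pos_INR. field. repeat split; lra. Qed.

Lemma log_pow_weight_harm_sum_bound : forall M k, log_pow (S M) k * weight_harm_sum (S M) <= 2 * disc_error (S M) (S k).
Proof. intros. unfold disc_error. rewrite weight_harm_sum_eq. unfold log_pow. assert (0 <= harm (S M)) by apply harm_nonneg.
 assert (0 < INR (S M)) by apply INR_S_pos. assert (INR (S M) < INR (S (S M))) by (apply lt_INR; lia).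
 assert (0 <= (1 + harm (S M)) ^ k) by (apply pow_le; lra).
 simpl pow. unfold Rdiv.
 apply Rle_trans with ((1 + harm (S M)) ^ k * (2 * harm (S M) * / INR (S M))).
 apply Rmult_le_compat_l; auto. apply Rmult_le_compat_l. lra. apply Rinv_le_contravar; lra.
 assert (0 < / INR (S M)) by (apply Rinv_0_lt_compat; lra). nra. Qed.

Lemma shifted_tail_sum_upper : forall M k', let K := S M in let k := S k' in
  sumN K (fun r => weight K r * tail_pow K k (r - 2)) <= INR (fact k) * harm_pow (S k) K + 6 * INR k * log_pow K k * weight_harm_sum K.
Proof. intros M k' K k. unfold K, k in *. clear K k. set (K := S M). set (k := S k').
 apply Rle_trans with (sumN K (fun r => weight K r * tail_pow K k r + (6 * INR k * log_pow K k) * (weight K r / INR (S r)))).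
 - apply sumN_le. intros r Hr. unfold tail_pow.
   assert (Hm1 : harm (r - 2) <= harm r) by (apply harm_mono; lia). assert (Hm2 : harm r <= harm K) by (apply harm_mono; lia).
   assert (Hd := pow_diff_up k' (harm K - harm (r - 2)) (harm K - harm r) ltac:(lra)).
   fold k in Hd. assert (Hd2 := harm_diff2 r). assert (Hw := weight_pos K r Hr).
   assert (0 <= harm (r - 2)) by apply harm_nonneg.
   assert (Hx : (harm K - harm (r - 2)) ^ k' <= log_pow K k).
   { unfold log_pow. apply Rle_trans with ((1 + harm K) ^ k'). apply pow_incr; lra.
     apply Rle_pow. assert (0 <= harm K) by apply harm_nonneg. lra. unfold k; lia. }
   assert (0 <= (harm K - harm (r - 2)) ^ k') by (apply pow_le; lra).
   assert (0 <= INR k) by apply pos_INR.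
   replace (harm K - harm (r - 2) - (harm K - harm r)) with (harm r - harm (r - 2)) in Hd by ring.
   change (INR (S k')) with (INR k) in Hd.
   assert (INR k * (harm r - harm (r - 2)) * (harm K - harm (r - 2)) ^ k' <= INR k * (6 / INR (S r)) * log_pow K k).
   { apply Rmult_le_compat. apply Rmult_le_pos; lra. lra. apply Rmult_le_compat_l; lra. lra. }
   assert (weight K r * ((harm K - harm (r - 2)) ^ k - (harm K - harm r) ^ k) <= weight K r * (INR k * (6 / INR (S r)) * log_pow K k)) by (apply Rmult_le_compat_l; lra).
   unfold Rdiv in *. lra.
 - rewrite sumN_plus, sumN_scal. fold (weight_harm_sum K).
   assert (HU := tail_sum_le K k (weight K) (fun r Hr => Rlt_le _ _ (weight_pos K r Hr))).
   unfold K in HU. rewrite sum_avg_iter_weight in HU. fold K in HU. lra. Qed.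

Lemma shifted_tail_sum_lower : forall M k, let N := S M in
  sumN N (fun r => weight N r * tail_pow N k (S r)) >=
  INR (fact k) * harm_pow (S k) N - (INR (fact k) * INR (k * k) + INR k) * log_pow N k * weight_harm_sum N.
Proof. intros M k N.
 apply Rge_trans with (sumN N (fun r => weight N r * tail_pow N k r - (INR k * log_pow N k) * (weight N r / INR (S r)))).
 - apply Rle_ge, sumN_le. intros r Hr. assert (Hp := tail_pow_step N k k r (le_n _) Hr).
   assert (Hw := weight_pos N r Hr). unfold Rdiv in *.
   assert (weight N r * (tail_pow N k r - tail_pow N k (S r)) <= weight N r * (INR k * log_pow N k * / INR (S r))) by (apply Rmult_le_compat_l; lra).
   lra.
 - rewrite sumN_minus, sumN_scal. fold (weight_harm_sum N).
   assert (HL := tail_sum_ge N k k (le_n _) (weight N) (fun i r Hr => avg_iter_weight_bounded N i r Hr)).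
   unfold N in HL. rewrite sum_avg_iter_weight in HL. fold N in HL. lra. Qed.

(* One-dimensional step functions: lists of (coefficient, (left end, right end)),
   with pointwise value [step1_val] and integral [step1_int]. *)
Definition seg := (R * (R * R))%type.

Definition seg_val (q : seg) (y : R) : R :=
  if Rle_dec (fst (snd q)) y then if Rle_dec y (snd (snd q)) then fst q else 0 else 0.

Definition step1_val (L : list seg) (y : R) : R := fold_right (fun q acc => seg_val q y + acc) 0 L.

Definition step1_int (L : list seg) : R := fold_right (fun q acc => fst q * (snd (snd q) - fst (snd q)) + acc) 0 L.

Lemma step1_val_app : forall l1 l2 y, step1_val (l1 ++ l2) y = step1_val l1 y + step1_val l2 y.
Proof. induction l1; intros; simpl. lra. unfold step1_val in *. simpl. rewrite IHl1. lra. Qed.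

Lemma step1_int_app : forall l1 l2, step1_int (l1 ++ l2) = step1_int l1 + step1_int l2.
Proof. induction l1; intros; simpl. lra. unfold step1_int in *. simpl. rewrite IHl1. lra. Qed.

Lemma step1_val_seq : forall (f : nat -> seg) n y, step1_val (map f (seq 0 n)) y = sumN n (fun i => seg_val (f i) y).
Proof. intros f n y. induction n. reflexivity. rewrite seq_S, map_app, step1_val_app, IHn. simpl. unfold step1_val; simpl. lra. Qed.

Lemma step1_int_seq : forall (f : nat -> seg) n, step1_int (map f (seq 0 n)) = sumN n (fun i => fst (f i) * (snd (snd (f i)) - fst (snd (f i)))).
Proof. intros f n. induction n. reflexivity. rewrite seq_S, map_app, step1_int_app, IHn. simpl. unfold step1_int; simpl. lra. Qed.

Lemma step1_val_nonneg : forall L y, (forall p, In p L -> 0 <= fst p) -> 0 <= step1_val L y.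
Proof. induction L; intros; simpl. lra. apply Rplus_le_le_0_compat. unfold seg_val. destruct (Rle_dec _ _); [destruct (Rle_dec _ _)|]; try lra. apply H; left; auto.
 apply IHL; intros; apply H; right; auto. Qed.

Lemma step1_val_ge_term : forall L y p, In p L -> (forall p, In p L -> 0 <= fst p) -> seg_val p y <= step1_val L y.
Proof. induction L; intros y p Hp Hn. destruct Hp. simpl. destruct Hp as [E|Hp].
 subst. assert (0 <= step1_val L y) by (apply step1_val_nonneg; intros; apply Hn; right; auto). lra.
 assert (0 <= seg_val a y). { unfold seg_val. destruct (Rle_dec _ _); [destruct (Rle_dec _ _)|]; try lra. apply Hn; left; auto. }
 assert (seg_val p y <= step1_val L y) by (apply IHL; auto; intros; apply Hn; right; auto). lra. Qed.

Lemma step1_val_pos_in : forall L y, 0 < step1_val L y -> exists p, In p L /\ fst (snd p) <= y <= snd (snd p).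
Proof. induction L; intros y Hv; simpl in Hv. lra. unfold seg_val in Hv. destruct (Rle_dec (fst (snd a)) y); [destruct (Rle_dec y (snd (snd a)))|].
 - exists a; split; [left|]; auto.
 - destruct (IHL y ltac:(lra)) as [p [Hp Hy]]. exists p; split; [right|]; auto.
 - destruct (IHL y ltac:(lra)) as [p [Hp Hy]]. exists p; split; [right|]; auto. Qed.

Lemma seg_val_neq0 : forall p y, seg_val p y <> 0 -> fst (snd p) <= y <= snd (snd p).
Proof. intros p y H. unfold seg_val in H. destruct (Rle_dec _ _); [destruct (Rle_dec _ _)|]; try lra; auto. Qed.

Lemma listmin : forall P p, let m := fold_right Rmin p P in
  (m = p \/ In m P) /\ m <= p /\ forall e, In e P -> m <= e.
Proof. induction P; intros p m; simpl in m. subst m; split; [left|split]; auto; [lra|intros e []].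
 destruct (IHP p) as [H0 [H1 H2]]. subst m. set (m' := fold_right Rmin p P) in *.
 split; [|split]. unfold Rmin; destruct (Rle_dec a m'). right; left; auto. destruct H0; [left|right;right]; auto.
 apply Rle_trans with m'; auto. apply Rmin_r.
 intros e [He|He]. subst; apply Rmin_l. apply Rle_trans with m'; auto. apply Rmin_r. Qed.

(* Sweep-line step: drop the part of every segment lying left of [p1]. *)
Definition sweep_map (p1 : R) (q : seg) : seg :=
  if Rlt_dec (snd (snd q)) p1 then (0, (p1, p1)) else (fst q, (Rmax (fst (snd q)) p1, snd (snd q))).

Lemma sweep_val : forall p1 L y, step1_val (map (sweep_map p1) L) y = if Rlt_dec y p1 then 0 else step1_val L y.
Proof. intros p1 L y; induction L as [|q L IH]; simpl. destruct (Rlt_dec y p1); auto.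
 rewrite IH. destruct q as [c [l h]]. unfold sweep_map, seg_val; simpl.
 destruct (Rlt_dec h p1); simpl.
 - destruct (Rle_dec p1 y); destruct (Rle_dec y p1); destruct (Rlt_dec y p1); destruct (Rle_dec l y); destruct (Rle_dec y h); try lra.
 - destruct (Rlt_dec y p1).
   + destruct (Rle_dec (Rmax l p1) y). assert (p1 <= Rmax l p1) by apply Rmax_r. lra. lra.
   + assert (l <= Rmax l p1) by apply Rmax_l.
     destruct (Rle_dec (Rmax l p1) y); destruct (Rle_dec l y); destruct (Rle_dec y h); try lra;
     assert (Rmax l p1 <= y) by (apply Rmax_lub; lra); lra. Qed.

(* If all endpoints are [p0] or [>= p1], the step function is constant on [(p0,p1)]:
   the integral is the swept integral plus that constant times [p1 - p0]. *)
Lemma sweep_int : forall p0 p1 P L, p0 < p1 ->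
  (forall e, In e P -> e = p0 \/ p1 <= e) ->
  (forall q, In q L -> In (fst (snd q)) P /\ In (snd (snd q)) P /\ fst (snd q) <= snd (snd q)) ->
  step1_int L = step1_int (map (sweep_map p1) L) + (p1 - p0) * step1_val L ((p0 + p1) / 2).
Proof. intros p0 p1 P L Hlt HP; induction L as [|q L IH]; intros HL; simpl. ring.
 rewrite IH by (intros; apply HL; right; auto).
 destruct q as [c [l h]]. destruct (HL (c,(l,h)) (or_introl eq_refl)) as [Hl [Hh Hlh]]; simpl in *.
 apply HP in Hl; apply HP in Hh. unfold sweep_map, seg_val; simpl.
 destruct (Rlt_dec h p1).
 - simpl. destruct (Rle_dec l ((p0 + p1) / 2)); destruct (Rle_dec ((p0 + p1) / 2) h); try lra.
   destruct Hh; destruct Hl; try lra. subst. ring.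
 - simpl. destruct Hl as [Hl|Hl].
   + subst. rewrite Rmax_right by lra. destruct (Rle_dec p0 ((p0 + p1) / 2)); [|lra].
     destruct (Rle_dec ((p0 + p1) / 2) h); [|lra]. ring.
   + rewrite Rmax_left by lra. destruct (Rle_dec l ((p0 + p1) / 2)); [lra|]. ring. Qed.

Lemma step1_int_degenerate (p0 : R) (L : list seg) :
  (forall q, In q L -> fst (snd q) = p0 /\ snd (snd q) = p0) -> step1_int L = 0.
Proof.
  induction L as [|q L IH]; intros HL; simpl; [reflexivity |].
  destruct (HL q (or_introl eq_refl)) as [E1 E2]. rewrite E1, E2, IH by (intros; apply HL; right; auto).
  ring.
Qed.

Lemma sweep_endpoints (p0 p1 : R) (P : list R) (L : list seg) :
  p0 < p1 -> In p1 (remove Req_dec_T p0 P) -> (forall e, In e P -> e = p0 \/ p1 <= e) ->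
  (forall q, In q L -> In (fst (snd q)) P /\ In (snd (snd q)) P /\ fst (snd q) <= snd (snd q)) ->
  forall q, In q (map (sweep_map p1) L) ->
    In (fst (snd q)) (remove Req_dec_T p0 P) /\ In (snd (snd q)) (remove Req_dec_T p0 P)
    /\ fst (snd q) <= snd (snd q).
Proof.
  intros Hlt Hp1 HP HL q' Hq'. apply in_map_iff in Hq'. destruct Hq' as [[c [l h]] [<- Hin]].
  destruct (HL _ Hin) as [Hl [Hh Hlh]]; cbn [fst snd] in *. unfold sweep_map; cbn [fst snd].
  destruct (Rlt_dec h p1); cbn [fst snd]; [split; [| split]; auto; lra |].
  assert (HhQ : In h (remove Req_dec_T p0 P)) by (apply in_in_remove; auto; intro; subst; lra).
  split; [| split]; auto.
  - destruct (HP l Hl) as [-> | Hl1].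
    + rewrite Rmax_right by lra. auto.
    + rewrite Rmax_left by lra. apply in_in_remove; auto. intro; subst; lra.
  - apply Rmax_lub; lra.
Qed.

(* A one-dimensional step function that is pointwise nonnegative has nonnegative
   integral: by induction on the number of endpoints, split off the slab between the
   two smallest endpoints [p0 < p1], where the function is a nonnegative constant,
   and sweep it away. *)
Lemma step1_int_nonneg : forall n P L, (length P <= n)%nat ->
  (forall q, In q L -> In (fst (snd q)) P /\ In (snd (snd q)) P /\ fst (snd q) <= snd (snd q)) ->
  (forall y, 0 <= step1_val L y) -> 0 <= step1_int L.
Proof.
  induction n; intros P L HPn HL Hv.
  - destruct P; [| simpl in HPn; lia]. destruct L as [|q L]; [simpl; lra |].
    destruct (HL q (or_introl eq_refl)) as [[] _].
  - destruct P as [|p P']; [destruct L as [|q L]; [simpl; lra | destruct (HL q (or_introl eq_refl)) as [[] _]] |].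
    destruct (listmin P' p) as [Hm1 [Hm2 Hm3]]. set (p0 := fold_right Rmin p P') in *.
    assert (Hp0 : In p0 (p :: P')) by (destruct Hm1; [left | right]; auto).
    assert (Hp0le : forall e, In e (p :: P') -> p0 <= e) by (intros e [He | He]; [subst |]; auto).
    assert (HQlen : (length (remove Req_dec_T p0 (p :: P')) < length (p :: P'))%nat)
      by (apply remove_length_lt; auto).
    destruct (remove Req_dec_T p0 (p :: P')) as [|q Q'] eqn:EQ.
    + assert (Hall : forall e, In e (p :: P') -> e = p0).
      { intros e He. destruct (Req_dec_T e p0); auto.
        assert (Hin : In e (remove Req_dec_T p0 (p :: P'))) by (apply in_in_remove; auto).
        rewrite EQ in Hin. destruct Hin. }
      rewrite (step1_int_degenerate p0); [lra |].
      intros q Hq. destruct (HL q Hq) as [H1 [H2 _]]. auto.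
    + destruct (listmin Q' q) as [Hn1 [Hn2 Hn3]]. set (p1 := fold_right Rmin q Q') in *.
      assert (Hp1 : In p1 (remove Req_dec_T p0 (p :: P'))) by (rewrite EQ; destruct Hn1; [left | right]; auto).
      assert (Hp1le : forall e, In e (remove Req_dec_T p0 (p :: P')) -> p1 <= e)
        by (rewrite EQ; intros e [He | He]; [subst |]; auto).
      destruct (in_remove _ _ _ _ Hp1) as [Hp1P Hp1ne].
      assert (Hlt : p0 < p1) by (assert (p0 <= p1) by auto; lra).
      assert (HP : forall e, In e (p :: P') -> e = p0 \/ p1 <= e).
      { intros e He. destruct (Req_dec_T e p0); [left; auto | right]. apply Hp1le, in_in_remove; auto. }
      rewrite (sweep_int p0 p1 (p :: P') L Hlt HP HL).
      assert (0 <= step1_int (map (sweep_map p1) L)).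
      { apply (IHn (q :: Q')); [simpl in HQlen, HPn |- *; lia | |].
        - rewrite <- EQ. apply sweep_endpoints; auto.
        - intros y. rewrite sweep_val. destruct (Rlt_dec y p1); auto. lra. }
      assert (0 <= step1_val L ((p0 + p1) / 2)) by auto. nra.
Qed.

Definition in_segb (a b y : R) : bool := if Rle_dec a y then if Rle_dec y b then true else false else false.

Lemma in_boxb_S : forall m B x, in_boxb (S m) B x = (in_boxb m B x && in_segb (lo B m) (hi B m) (x m))%bool.
Proof. intros. unfold in_boxb. rewrite seq_S, forallb_app. simpl. rewrite Bool.andb_true_r. reflexivity. Qed.

Lemma in_boxb_ext : forall m B x x', (forall i, (i < m)%nat -> x i = x' i) -> in_boxb m B x = in_boxb m B x'.
Proof. induction m; intros B x x' Hx. reflexivity. rewrite !in_boxb_S. rewrite (IHm B x x') by (intros; apply Hx; lia).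
 rewrite Hx by lia. reflexivity. Qed.

Lemma in_boxb_bext : forall m B B' x, (forall i, (i < m)%nat -> lo B i = lo B' i /\ hi B i = hi B' i) ->
  in_boxb m B x = in_boxb m B' x.
Proof. induction m; intros B B' x HB. reflexivity. rewrite !in_boxb_S. rewrite (IHm B B' x) by (intros; apply HB; lia).
 destruct (HB m (Nat.lt_succ_diag_r m)) as [E1 E2]. rewrite E1, E2. reflexivity. Qed.

Definition upd (x : nat -> R) (m : nat) (y : R) : nat -> R := fun i => if Nat.eq_dec i m then y else x i.

Lemma upd_lt : forall f m v i, (i < m)%nat -> upd f m v i = f i.
Proof. intros. unfold upd. destruct (Nat.eq_dec i m); [lia|auto]. Qed.

Lemma upd_eq : forall f m v, upd f m v m = v.
Proof. intros. unfold upd. destruct (Nat.eq_dec m m); [auto|lia]. Qed.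

(* Slicing an [(m+1)]-dimensional step function at [x m = y], and projecting it to
   the last coordinate (coefficients weighted by the [m]-volume): Fubini for step functions. *)
Definition slice_at (m : nat) (y : R) (u : step_fun) : step_fun :=
  map (fun q => (if in_segb (lo (snd q) m) (hi (snd q) m) y then fst q else 0, snd q)) u.

Definition project (m : nat) (u : step_fun) : list seg :=
  map (fun q => (fst q * box_vol m (snd q), (lo (snd q) m, hi (snd q) m))) u.

Lemma step_val_slice : forall m y u x, step_val m (slice_at m y u) x = step_val (S m) u (upd x m y).
Proof. intros. induction u as [|q u IH]; simpl. reflexivity. unfold step_val in *; simpl. rewrite IH.
 rewrite in_boxb_S. rewrite (in_boxb_ext m (snd q) (upd x m y) x) by (intros; unfold upd; destruct (Nat.eq_dec i m); [lia|auto]).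
 unfold upd at 2. destruct (Nat.eq_dec m m); [|lia].
 destruct (in_boxb m (snd q) x); destruct (in_segb (lo (snd q) m) (hi (snd q) m) y); simpl; reflexivity. Qed.

Lemma step_int_slice : forall m y u, step_int m (slice_at m y u) = step1_val (project m u) y.
Proof. intros. induction u as [|q u IH]; simpl. reflexivity. unfold step_int in *; simpl. rewrite IH.
 unfold seg_val, in_segb; simpl. destruct (Rle_dec (lo (snd q) m) y); destruct (Rle_dec y (hi (snd q) m)); simpl; ring. Qed.

Lemma step1_int_project : forall m u, step1_int (project m u) = step_int (S m) u.
Proof. intros. induction u as [|q u IH]; simpl. reflexivity. unfold step_int in *; simpl. rewrite IH.
 unfold box_vol. simpl prodR. ring. Qed.

Definition boxes_ok (m : nat) (u : step_fun) : Prop :=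
  forall q, In q u -> forall i, (i < m)%nat -> lo (snd q) i <= hi (snd q) i.

(* A pointwise nonnegative step function on [R^m] has nonnegative integral
   (induction on [m], slicing, and the one-dimensional case). *)
Lemma step_int_nonneg : forall m u, boxes_ok m u -> (forall x, 0 <= step_val m u x) -> 0 <= step_int m u.
Proof. induction m; intros u Hok Hv.
 - assert (E : step_int 0 u = step_val 0 u (fun _ => 0)).
   { clear. induction u as [|q u IH]; simpl. reflexivity. unfold step_int, step_val in *; simpl. rewrite IH.
     unfold box_vol; simpl. ring. }
   rewrite E; auto.
 - rewrite <- step1_int_project.
   apply (step1_int_nonneg _ (flat_map (fun q => fst (snd q) :: snd (snd q) :: nil) (project m u)) _ (le_n _)).
   + intros q Hq. split; [|split].
     apply in_flat_map. exists q; split; auto; left; auto.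
     apply in_flat_map. exists q; split; auto; right; left; auto.
     unfold project in Hq. apply in_map_iff in Hq. destruct Hq as [q' [E Hq']]. subst q. simpl. apply Hok; auto.
   + intros y. rewrite <- step_int_slice. apply IHm.
     intros q Hq i Hi. unfold slice_at in Hq. apply in_map_iff in Hq. destruct Hq as [q' [E Hq']]. subst q. simpl. apply Hok; auto.
     intros x. rewrite step_val_slice. auto. Qed.

Definition step_neg (s : step_fun) : step_fun := map (fun q => (- fst q, snd q)) s.

Lemma step_val_app : forall m s t x, step_val m (s ++ t) x = step_val m s x + step_val m t x.
Proof. intros. induction s as [|q s IH]; simpl. unfold step_val; simpl; ring. unfold step_val in *; simpl. rewrite IH. ring. Qed.

Lemma step_int_app : forall m s t, step_int m (s ++ t) = step_int m s + step_int m t.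
Proof. intros. induction s as [|q s IH]; simpl. unfold step_int; simpl; ring. unfold step_int in *; simpl. rewrite IH. ring. Qed.

Lemma step_val_neg : forall m s x, step_val m (step_neg s) x = - step_val m s x.
Proof. intros. induction s as [|q s IH]; simpl. unfold step_val; simpl; ring. unfold step_val in *; simpl. rewrite IH.
 destruct (in_boxb m (snd q) x); ring. Qed.

Lemma step_int_neg : forall m s, step_int m (step_neg s) = - step_int m s.
Proof. intros. induction s as [|q s IH]; simpl. unfold step_int; simpl; ring. unfold step_int in *; simpl. rewrite IH. ring. Qed.

(* Monotonicity of the step integral: the integral is well defined on functions. *)
Lemma step_int_mono : forall m s t, boxes_ok m s -> boxes_ok m t ->
  (forall x, step_val m s x <= step_val m t x) -> step_int m s <= step_int m t.
Proof. intros m s t Hs Ht Hv. assert (0 <= step_int m (t ++ step_neg s)).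
 { apply step_int_nonneg. intros q Hq. apply in_app_or in Hq. destruct Hq as [Hq|Hq]. apply Ht; auto.
   unfold step_neg in Hq. apply in_map_iff in Hq. destruct Hq as [q' [E Hq']]. subst; simpl. apply Hs; auto.
   intros x. rewrite step_val_app, step_val_neg. specialize (Hv x). lra. }
 rewrite step_int_app, step_int_neg in H. lra. Qed.

Lemma step_val_flat : forall m (F : R * box -> step_fun) l x,
  step_val m (flat_map F l) x = fold_right (fun q acc => step_val m (F q) x + acc) 0 l.
Proof. intros. induction l as [|q l IH]; simpl. reflexivity. rewrite step_val_app, IH. reflexivity. Qed.

Lemma step_int_flat : forall m (F : R * box -> step_fun) l,
  step_int m (flat_map F l) = fold_right (fun q acc => step_int m (F q) + acc) 0 l.
Proof. intros. induction l as [|q l IH]; simpl. reflexivity. rewrite step_int_app, IH. reflexivity. Qed.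

Lemma step_val_flatseq : forall m (F : nat -> step_fun) n x, step_val m (flat_map F (seq 0 n)) x = sumN n (fun r => step_val m (F r) x).
Proof. intros. induction n. reflexivity. rewrite seq_S, flat_map_app, step_val_app, IHn. simpl. rewrite app_nil_r. reflexivity. Qed.

Lemma step_int_flatseq : forall m (F : nat -> step_fun) n, step_int m (flat_map F (seq 0 n)) = sumN n (fun r => step_int m (F r)).
Proof. intros. induction n. reflexivity. rewrite seq_S, flat_map_app, step_int_app, IHn. simpl. rewrite app_nil_r. reflexivity. Qed.

Definition coef_sum (s : step_fun) : R := fold_right (fun q acc => fst q + acc) 0 s.

Lemma coef_sum_nonneg : forall s, (forall q, In q s -> 0 <= fst q) -> 0 <= coef_sum s.
Proof. induction s; intros; simpl. lra. assert (0 <= fst a) by (apply H; left; auto).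
 assert (0 <= coef_sum s) by (apply IHs; intros; apply H; right; auto). lra. Qed.

Lemma step_val_le_coef_sum : forall m s x, (forall q, In q s -> 0 <= fst q) -> step_val m s x <= coef_sum s.
Proof. induction s; intros; simpl. unfold step_val; simpl; lra. unfold step_val in *; simpl.
 assert (IH := IHs x (fun q Hq => H q (or_intror Hq))). assert (0 <= fst a) by (apply H; left; auto).
 destruct (in_boxb m (snd a) x); lra. Qed.

Lemma step_val_nonneg : forall m s x, (forall q, In q s -> 0 <= fst q) -> 0 <= step_val m s x.
Proof. induction s; intros; simpl. unfold step_val; simpl; lra. unfold step_val in *; simpl.
 assert (IH := IHs x (fun q Hq => H q (or_intror Hq))). assert (0 <= fst a) by (apply H; left; auto).
 destruct (in_boxb m (snd a) x); lra. Qed.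

Definition ext_box (m : nat) (q : R * box) (p : seg) : R * box :=
  (fst q * fst p, Box (upd (lo (snd q)) m (fst (snd p))) (upd (hi (snd q)) m (snd (snd p)))).

Fixpoint tensor (L : nat -> list seg) (m : nat) : step_fun :=
  match m with
  | O => (1, Box (fun _ => 0) (fun _ => 0)) :: nil
  | S m' => flat_map (fun q => map (ext_box m' q) (L m')) (tensor L m')
  end.

Lemma box_vol_ext : forall m B B', (forall i, (i < m)%nat -> lo B i = lo B' i /\ hi B i = hi B' i) -> box_vol m B = box_vol m B'.
Proof. intros. unfold box_vol. apply prodR_ext. intros. destruct (H i H0) as [E1 E2]. rewrite E1, E2. auto. Qed.

Lemma step_val_ext_box : forall m q Lm x, step_val (S m) (map (ext_box m q) Lm) x
   = (if in_boxb m (snd q) x then fst q else 0) * step1_val Lm (x m).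
Proof. intros. induction Lm as [|p L' IHL]; simpl. unfold step_val; simpl; ring.
   unfold step_val in *; simpl. rewrite IHL. rewrite in_boxb_S. unfold ext_box; simpl.
   rewrite (in_boxb_bext m _ (snd q)) by (intros; simpl; rewrite !upd_lt; auto).
   rewrite upd_eq, upd_eq. unfold seg_val, in_segb. destruct (in_boxb m (snd q) x); destruct (Rle_dec (fst (snd p)) (x m)); destruct (Rle_dec (x m) (snd (snd p))); simpl; ring. Qed.

Lemma step_val_tensor : forall L m x, step_val m (tensor L m) x = prodR m (fun i => step1_val (L i) (x i)).
Proof. intros L m x. induction m; simpl. unfold step_val; simpl. ring.
 rewrite step_val_flat. rewrite <- IHm. clear IHm.
 induction (tensor L m) as [|q l IH]; simpl. unfold step_val; simpl; ring.
 rewrite IH. rewrite step_val_ext_box. unfold step_val; simpl. ring. Qed.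

Lemma step_int_ext_box : forall m q Lm, step_int (S m) (map (ext_box m q) Lm) = fst q * box_vol m (snd q) * step1_int Lm.
Proof. intros. induction Lm as [|p L' IHL]; simpl. unfold step_int; simpl; ring.
   unfold step_int in *; simpl. rewrite IHL. unfold ext_box.
   set (B' := {| lo := upd (lo (snd q)) m (fst (snd p)); hi := upd (hi (snd q)) m (snd (snd p)) |}).
   change (box_vol (S m) B') with (box_vol m B' * (hi B' m - lo B' m)).
   rewrite (box_vol_ext m B' (snd q)) by (intros; unfold B'; simpl; rewrite !upd_lt; auto). unfold B'; simpl. rewrite !upd_eq. ring. Qed.

Lemma step_int_tensor : forall L m, step_int m (tensor L m) = prodR m (fun i => step1_int (L i)).
Proof. intros L m. induction m; simpl. unfold step_int; simpl. unfold box_vol; simpl. ring.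
 rewrite step_int_flat. rewrite <- IHm. clear IHm.
 induction (tensor L m) as [|q l IH]; simpl. unfold step_int; simpl; ring.
 rewrite IH. rewrite step_int_ext_box. unfold step_int; simpl. ring. Qed.

Lemma tensor_boxes_ok : forall L m, (forall i p, (i < m)%nat -> In p (L i) -> fst (snd p) <= snd (snd p)) ->
  boxes_ok m (tensor L m).
Proof. intros L m; induction m; intros HL q Hq i Hi. lia.
 simpl in Hq. apply in_flat_map in Hq. destruct Hq as [q' [Hq' Hq]]. apply in_map_iff in Hq. destruct Hq as [p [E Hp]]. subst q. unfold ext_box; simpl.
 unfold upd. destruct (Nat.eq_dec i m). subst i. apply (HL m); auto.
 apply (IHm (fun i0 p0 Hi0 Hp0 => HL i0 p0 ltac:(lia) Hp0) q' Hq' i). lia. Qed.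

Lemma tensor_coef_nonneg : forall L m, (forall i p, (i < m)%nat -> In p (L i) -> 0 <= fst p) ->
  forall q, In q (tensor L m) -> 0 <= fst q.
Proof. intros L m; induction m; intros HL q Hq. simpl in Hq. destruct Hq as [E|[]]. subst; simpl; lra.
 simpl in Hq. apply in_flat_map in Hq. destruct Hq as [q' [Hq' Hq]]. apply in_map_iff in Hq. destruct Hq as [p [E Hp]]. subst q. unfold ext_box; simpl.
 apply Rmult_le_pos. apply (IHm (fun i0 p0 Hi0 Hp0 => HL i0 p0 ltac:(lia) Hp0) q' Hq'). apply (HL m); auto. Qed.

Lemma find_cell_nat : forall N z, (2 <= N)%nat -> 1 <= z <= INR N -> exists b, (2 <= b <= N)%nat /\ INR b - 1 <= z <= INR b.
Proof. induction N; intros z HN Hz. lia. destruct (Nat.eq_dec N 1). subst. exists 2%nat. split. lia. simpl in *. lra.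
 destruct (Rle_dec z (INR N)). destruct (IHN z ltac:(lia) ltac:(lra)) as [b [Hb Hb']]. exists b; split; auto; lia.
 exists (S N). split. lia. rewrite S_INR in *. lra. Qed.

Lemma find_cell : forall N y, (2 <= N)%nat -> / INR N < y <= 1 ->
  exists b, (2 <= b <= N)%nat /\ (INR b - 1) / INR N <= y <= INR b / INR N.
Proof. intros N y HN Hy. assert (0 < INR N) by (apply lt_0_INR; lia).
 destruct (find_cell_nat N (INR N * y) HN) as [b [Hb Hb']].
 split. apply Rmult_le_reg_l with (/ INR N). apply Rinv_0_lt_compat; auto. rewrite <- Rmult_assoc, Rinv_l, Rmult_1_r, Rmult_1_l by lra. lra.
 rewrite <- (Rmult_1_r (INR N)) at 2. apply Rmult_le_compat_l; lra.
 exists b. split; auto. split; unfold Rdiv; apply Rmult_le_reg_l with (INR N); auto; field_simplify; lra. Qed.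

Lemma cells_disjoint : forall N eta (c c' : nat) y, 0 < INR N -> 0 < eta ->
  (INR c - 1) / INR N + eta <= y <= INR c / INR N -> (INR c' - 1) / INR N + eta <= y <= INR c' / INR N -> c = c'.
Proof. intros N eta c c' y HN He H0 H1. destruct (lt_eq_lt_dec c c') as [[Hl|E]|Hl]; auto; exfalso.
 - assert (INR c + 1 <= INR c') by (rewrite <- S_INR; apply le_INR; lia).
   assert (INR c / INR N <= (INR c' - 1) / INR N) by (unfold Rdiv; apply Rmult_le_compat_r; [left; apply Rinv_0_lt_compat; auto|lra]). lra.
 - assert (INR c' + 1 <= INR c) by (rewrite <- S_INR; apply le_INR; lia).
   assert (INR c' / INR N <= (INR c - 1) / INR N) by (unfold Rdiv; apply Rmult_le_compat_r; [left; apply Rinv_0_lt_compat; auto|lra]). lra. Qed.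

(* The dominating step function at mesh [1/N], [N = K + 1].  Its term of index [r]
   covers first coordinates in the cell of index [a = N - r], where
   [1/x_0 <= N/(a-1) = N weight K r]; the constraint [x_0 + x_j >= 1] puts every other
   coordinate in a cell of index [b >= r], where [1/x_j <= N/(b-1)].  Points with a
   coordinate [<= 1/N] are covered by [m] layers of height [C], the sum of the
   coefficients of the function to dominate. *)
Definition up_first (N K r : nat) : list seg := (INR N * weight K r, ((INR K - INR r) / INR N, (INR K - INR r + 1) / INR N)) :: nil.

Definition up_index (r i : nat) : nat := (r - 2 + 1 + i)%nat.

Definition up_other (N K r : nat) : list seg :=
  map (fun i => (INR N / INR (up_index r i), (INR (up_index r i) / INR N, (INR (up_index r i) + 1) / INR N))) (seq 0 (K - (r - 2))).

Definition up_factor (N K r : nat) : nat -> list seg := fun i => match i with O => up_first N K r | _ => up_other N K r end.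

Definition layer_factor (N : nat) (C : R) (i0 : nat) : nat -> list seg :=
  fun i => if Nat.eq_dec i i0 then (C, (0, / INR N)) :: nil else (1, (0, 1)) :: nil.

Definition upper_step (m N K : nat) (C : R) : step_fun :=
  flat_map (fun r => tensor (up_factor N K r) m) (seq 0 K) ++ flat_map (fun i0 => tensor (layer_factor N C i0) m) (seq 0 m).

Lemma step1_int_up_first : forall N K r, (0 < N)%nat -> step1_int (up_first N K r) = weight K r.
Proof. intros. unfold up_first, step1_int; simpl. assert (0 < INR N) by (apply lt_0_INR; lia). field. lra. Qed.

Lemma step1_int_up_other : forall N K r, (0 < N)%nat -> (r - 2 <= K)%nat -> step1_int (up_other N K r) = harm K - harm (r - 2).
Proof. intros. unfold up_other. rewrite step1_int_seq. simpl. assert (0 < INR N) by (apply lt_0_INR; lia).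
 replace K with ((r - 2) + (K - (r - 2)))%nat at 2 by lia. unfold harm at 1. rewrite sumN_split. fold (harm (r - 2)).
 match goal with |- ?a = ?b + ?c - ?b => enough (a = c) by lra end.
 apply sumN_ext. intros i Hi. unfold up_index. replace (r - 2 + 1 + i)%nat with (S (r - 2 + i)) by lia.
 assert (0 < INR (S (r - 2 + i))) by apply INR_S_pos. field. lra. Qed.

Lemma upper_step_int : forall k N K C, N = S K -> step_int (S k) (upper_step (S k) N K C) =
  sumN K (fun r => weight K r * (harm K - harm (r - 2)) ^ k) + INR (S k) * (C / INR N).
Proof. intros k N K C HN. unfold upper_step. rewrite step_int_app, !step_int_flatseq. f_equal.
 - apply sumN_ext. intros r Hr. rewrite step_int_tensor, prodR_S0. simpl up_factor. rewrite step1_int_up_first by lia.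
   change (prodR k (fun i => step1_int (up_factor N K r (S i)))) with (prodR k (fun _ => step1_int (up_other N K r))). rewrite prodR_const, step1_int_up_other by lia. reflexivity.
 - rewrite (sumN_ext _ _ (fun _ => C / INR N)). apply sumN_const.
   intros i0 Hi0. rewrite step_int_tensor. rewrite (prodR_ext _ _ (fun i => if Nat.eq_dec i i0 then C / INR N else 1)).
   apply prodR_one_at; auto. intros i Hi. unfold layer_factor. destruct (Nat.eq_dec i i0); unfold step1_int; simpl; unfold Rdiv; ring. Qed.

Lemma upper_step_boxes_ok : forall m N K C, (0 < N)%nat -> boxes_ok m (upper_step m N K C).
Proof. intros m N K C HN q Hq. assert (0 < INR N) by (apply lt_0_INR; lia). unfold upper_step in Hq. apply in_app_or in Hq. destruct Hq as [Hq|Hq];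
 apply in_flat_map in Hq; destruct Hq as [r [_ Hq]]; revert q Hq; apply tensor_boxes_ok; intros i p Hi Hp.
 - destruct i; simpl in Hp. destruct Hp as [E|[]]; subst; cbn [fst snd]. unfold Rdiv. apply Rmult_le_compat_r. left; apply Rinv_0_lt_compat; lra. lra.
   unfold up_other in Hp. apply in_map_iff in Hp. destruct Hp as [j [E _]]. subst. simpl. unfold Rdiv. apply Rmult_le_compat_r. left; apply Rinv_0_lt_compat; lra. lra.
 - unfold layer_factor in Hp. destruct (Nat.eq_dec i r); destruct Hp as [E|[]]; subst; cbn [fst snd]. left; apply Rinv_0_lt_compat; lra. lra. Qed.

Lemma up_factor_coef_nonneg (N K r i : nat) (p : seg) :
  (r < K)%nat -> In p (up_factor N K r i) -> 0 <= fst p.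
Proof.
  intros Hr Hp. destruct i as [|i]; cbn [up_factor] in Hp.
  - destruct Hp as [<- | []]. apply Rmult_le_pos; [apply pos_INR | left; apply weight_pos; auto].
  - unfold up_other in Hp. apply in_map_iff in Hp. destruct Hp as [j [<- _]]. cbn [fst].
    unfold Rdiv. apply Rmult_le_pos; [apply pos_INR |].
    left; apply Rinv_0_lt_compat, lt_0_INR. unfold up_index; lia.
Qed.

Lemma layer_factor_coef_nonneg (N : nat) (C : R) (i0 i : nat) (p : seg) :
  0 <= C -> In p (layer_factor N C i0 i) -> 0 <= fst p.
Proof.
  intros HC Hp. unfold layer_factor in Hp.
  destruct (Nat.eq_dec i i0); destruct Hp as [<- | []]; simpl; lra.
Qed.

Lemma layer_value (m N i0 : nat) (C : R) (x : nat -> R) :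
  (i0 < m)%nat -> (forall i, (i < m)%nat -> 0 <= x i <= 1) -> x i0 <= / INR N ->
  step_val m (tensor (layer_factor N C i0) m) x = C.
Proof.
  intros Hi0 H01 Hx. rewrite step_val_tensor.
  rewrite (prodR_ext _ _ (fun i => if Nat.eq_dec i i0 then C else 1)); [apply prodR_one_at; auto |].
  intros i Hi. destruct (H01 i Hi). unfold layer_factor.
  destruct (Nat.eq_dec i i0); unfold step1_val, seg_val; cbn [fst snd fold_right].
  - subst. destruct (Rle_dec 0 (x i0)); [| lra]. destruct (Rle_dec (x i0) (/ INR N)); [| lra]. ring.
  - destruct (Rle_dec 0 (x i)); [| lra]. destruct (Rle_dec (x i) 1); [| lra]. ring.
Qed.

Lemma inv_le_on_cell (N b : nat) (y : R) :
  (2 <= b)%nat -> (0 < N)%nat -> (INR b - 1) / INR N <= y -> / y <= INR N / (INR b - 1).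
Proof.
  intros Hb HN Hy. assert (0 < INR N) by (apply lt_0_INR; lia).
  assert (2 <= INR b) by (apply (le_INR 2); lia).
  replace (INR N / (INR b - 1)) with (/ ((INR b - 1) / INR N)) by (field; lra).
  apply Rinv_le_contravar; [apply Rdiv_lt_0_compat |]; lra.
Qed.

Lemma up_first_dominates (K a : nat) (y : R) :
  (2 <= a <= S K)%nat -> (INR a - 1) / INR (S K) <= y <= INR a / INR (S K) ->
  / y <= step1_val (up_first (S K) K (S K - a)) y.
Proof.
  intros Ha Hy. unfold up_first, step1_val, seg_val; cbn [fst snd fold_right].
  assert (E : INR K - INR (S K - a) = INR a - 1) by (rewrite minus_INR, S_INR by lia; lra).
  rewrite E. replace (INR a - 1 + 1) with (INR a) by ring.
  destruct (Rle_dec ((INR a - 1) / INR (S K)) y); [| lra].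
  destruct (Rle_dec y (INR a / INR (S K))); [| lra].
  rewrite Rplus_0_r. unfold weight. rewrite E. apply inv_le_on_cell; lia || lra.
Qed.

Lemma up_other_dominates (K a b : nat) (y : R) :
  (2 <= a <= S K)%nat -> (2 <= b <= S K)%nat -> (S K <= a + b)%nat ->
  (INR b - 1) / INR (S K) <= y <= INR b / INR (S K) ->
  / y <= step1_val (up_other (S K) K (S K - a)) y.
Proof.
  intros Ha Hb Hab Hy. set (r := (S K - a)%nat). set (i := (b - 1 - (r - 2) - 1)%nat).
  assert (Hi : (i < K - (r - 2))%nat) by (unfold i, r; lia).
  assert (Hbi : up_index r i = (b - 1)%nat) by (unfold up_index, i, r; lia).
  apply Rle_trans with (seg_val (INR (S K) / INR (up_index r i),
    (INR (up_index r i) / INR (S K), (INR (up_index r i) + 1) / INR (S K))) y).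
  - unfold seg_val; cbn [fst snd]. rewrite Hbi, minus_INR by lia. change (INR 1) with 1.
    replace (INR b - 1 + 1) with (INR b) by ring.
    destruct (Rle_dec ((INR b - 1) / INR (S K)) y); [| lra].
    destruct (Rle_dec y (INR b / INR (S K))); [| lra].
    apply inv_le_on_cell; lia || lra.
  - apply step1_val_ge_term.
    + unfold up_other. apply in_map_iff. exists i. split; auto. apply in_seq. lia.
    + intros p Hp. apply (up_factor_coef_nonneg (S K) K r 1); [unfold r; lia | exact Hp].
Qed.

Lemma cell_indices_sum (N a b : nat) (y0 y1 : R) :
  (0 < N)%nat -> y0 <= INR a / INR N -> y1 <= INR b / INR N -> y0 + y1 >= 1 ->
  (N <= a + b)%nat.
Proof.
  intros HN Ha Hb Hsum. assert (HNp : 0 < INR N) by (apply lt_0_INR; lia).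
  apply INR_le. rewrite plus_INR.
  apply Rmult_le_reg_r with (/ INR N); [apply Rinv_0_lt_compat; lra |].
  rewrite Rinv_r by lra. unfold Rdiv in Ha, Hb. lra.
Qed.

Lemma up_factor_dominates (k' K : nat) (x : nat -> R) :
  (1 <= K)%nat -> In_V (S (S k')) x -> (forall i, (i < S (S k'))%nat -> / INR (S K) < x i) ->
  exists r, (r < K)%nat /\
    / prodR (S (S k')) x <= prodR (S (S k')) (fun i => step1_val (up_factor (S K) K r i) (x i)).
Proof.
  intros HK [H01 Hsum] Hbig. set (m := S (S k')). set (N := S K).
  assert (HN : (2 <= N)%nat) by (unfold N; lia).
  destruct (find_cell N (x O) HN) as [a [Ha Hxa]]; [split; [apply Hbig | apply H01]; unfold m; lia |].
  exists (N - a)%nat. split; [unfold N in *; lia |].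
  assert (Hxpos : forall i, (i < m)%nat -> 0 < x i).
  { intros i Hi. apply Rlt_trans with (/ INR N); [apply Rinv_0_lt_compat, lt_0_INR; lia | apply Hbig; auto]. }
  rewrite <- prodR_inv by (intros i Hi; specialize (Hxpos i Hi); lra).
  apply prodR_le. intros i Hi. split; [left; apply Rinv_0_lt_compat; auto |].
  destruct i as [|j]; cbn [up_factor].
  - apply up_first_dominates; auto.
  - destruct (find_cell N (x (S j)) HN) as [b [Hb Hxb]]; [split; [apply Hbig | apply H01]; auto |].
    apply (up_other_dominates K a b); auto.
    apply (cell_indices_sum N a b (x O) (x (S j))); try lra; try lia. apply Hsum. unfold m in Hi; lia.
Qed.

(* The dominating function dominates every admissible step function [s] below the
   integrand: on points of [V_m] near a face by a layer, elsewhere through [1/(x_1...x_m)]. *)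
Lemma upper_step_dominates : forall k' K s x, let m := S (S k') in let N := S K in (1 <= K)%nat ->
  step_valid m s -> below_integrand m s ->
  step_val m s x <= step_val m (upper_step m N K (coef_sum s)) x.
Proof.
  intros k' K s x m N HK Hval Hbel. unfold upper_step. rewrite step_val_app, !step_val_flatseq.
  assert (Hc : forall q, In q s -> 0 <= fst q) by (intros [c B] Hq; apply (Hval c B Hq)).
  assert (HC : 0 <= coef_sum s) by (apply coef_sum_nonneg; auto).
  assert (Hups : forall r, (r < K)%nat -> 0 <= step_val m (tensor (up_factor N K r) m) x).
  { intros r Hr. apply step_val_nonneg, tensor_coef_nonneg. intros i p _. apply up_factor_coef_nonneg; auto. }
  assert (Hlayers : forall i0, (i0 < m)%nat -> 0 <= step_val m (tensor (layer_factor N (coef_sum s) i0) m) x).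
  { intros i0 _. apply step_val_nonneg, tensor_coef_nonneg. intros i p _. apply layer_factor_coef_nonneg; auto. }
  assert (S1 := sumN_nonneg _ _ Hups). assert (S2 := sumN_nonneg _ _ Hlayers).
  destruct (Hbel x) as [Hin Hout].
  destruct (classic (In_V m x)) as [HV | HV]; [| assert (step_val m s x <= 0) by auto; lra].
  destruct (classic (exists i0, (i0 < m)%nat /\ x i0 <= / INR N)) as [[i0 [Hi0 Hx0]] | Hno].
  - assert (Hlayer := sumN_ge_term _ _ i0 Hlayers Hi0). cbv beta in Hlayer.
    rewrite layer_value in Hlayer by (auto; apply (proj1 HV)).
    assert (step_val m s x <= coef_sum s) by (apply step_val_le_coef_sum; auto). lra.
  - assert (Hbig : forall i, (i < m)%nat -> / INR N < x i).
    { intros i Hi. apply Rnot_le_lt. intros Hle. apply Hno. exists i; auto. }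
    destruct (up_factor_dominates k' K x HK HV Hbig) as [r [Hr Hdom]].
    assert (Hpos : 0 < prodR m x).
    { apply prodR_pos. intros i Hi. apply Rlt_trans with (/ INR N); [apply Rinv_0_lt_compat, INR_S_pos | auto]. }
    assert (Hs : step_val m s x <= / prodR m x).
    { apply Rmult_le_reg_r with (prodR m x); auto. rewrite Rinv_l; [apply Hin; auto | lra]. }
    assert (Hterm := sumN_ge_term _ _ r Hups Hr). cbv beta in Hterm. rewrite step_val_tensor in Hterm.
    fold m N in Hdom. lra.
Qed.

(* The approximating step function from below: the tensor product of shrunk cells
   [(N - r)]-th in the first coordinate and [>= r + 2]-th in the others, whose boxes
   lie in [V_m] and are pairwise disjoint. *)
Definition lo_first (N : nat) (eta : R) (r : nat) : list seg :=
  (INR N * weight N r, ((INR (N - r) - 1) / INR N + eta, INR (N - r) / INR N)) :: nil.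

Definition lo_index (r i : nat) : nat := (r + 2 + i)%nat.

Definition lo_other (N : nat) (eta : R) (r : nat) : list seg :=
  map (fun i => (INR N / INR (lo_index r i), ((INR (lo_index r i) - 1) / INR N + eta, INR (lo_index r i) / INR N))) (seq 0 (N - S r)).

Definition lo_factor (N : nat) (eta : R) (r : nat) : nat -> list seg := fun i => match i with O => lo_first N eta r | _ => lo_other N eta r end.

Definition lower_step (m N : nat) (eta : R) : step_fun := flat_map (fun r => tensor (lo_factor N eta r) m) (seq 0 N).

Lemma step1_int_lo_first : forall N eta r, (r < N)%nat -> step1_int (lo_first N eta r) = (1 - INR N * eta) * weight N r.
Proof. intros. unfold lo_first, step1_int; cbn [fst snd fold_right]. assert (0 < INR N) by (apply lt_0_INR; lia). field. lra. Qed.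

Lemma step1_int_lo_other : forall N eta r, (r < N)%nat -> step1_int (lo_other N eta r) = (1 - INR N * eta) * (harm N - harm (S r)).
Proof. intros. unfold lo_other. rewrite step1_int_seq. cbn [fst snd]. assert (0 < INR N) by (apply lt_0_INR; lia).
 replace N with (S r + (N - S r))%nat at 3 by lia. unfold harm at 1. rewrite sumN_split. fold (harm (S r)).
 replace (harm (S r) + sumN (N - S r) (fun i => / INR (S (S r + i))) - harm (S r)) with (sumN (N - S r) (fun i => / INR (S (S r + i)))) by ring.
 rewrite <- sumN_scal. apply sumN_ext. intros i Hi. unfold lo_index. replace (r + 2 + i)%nat with (S (S r + i)) by lia.
 assert (0 < INR (S (S r + i))) by apply INR_S_pos. field. lra. Qed.

Lemma lower_step_int : forall k N eta, step_int (S k) (lower_step (S k) N eta) =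
  (1 - INR N * eta) ^ (S k) * sumN N (fun r => weight N r * tail_pow N k (S r)).
Proof. intros. unfold lower_step. rewrite step_int_flatseq. rewrite <- sumN_scal. apply sumN_ext. intros r Hr.
 rewrite step_int_tensor, prodR_S0. change (step1_int (lo_factor N eta r 0)) with (step1_int (lo_first N eta r)). rewrite step1_int_lo_first by auto.
 change (prodR k (fun i => step1_int (lo_factor N eta r (S i)))) with (prodR k (fun _ => step1_int (lo_other N eta r))).
 rewrite prodR_const, step1_int_lo_other by auto. unfold tail_pow. rewrite Rpow_mult_distr. simpl pow. ring. Qed.

Lemma lo_factor_coef_nonneg (N : nat) (eta : R) (r i : nat) (p : seg) :
  (r < N)%nat -> In p (lo_factor N eta r i) -> 0 <= fst p.
Proof.
  intros Hr Hp. destruct i as [|i]; cbn [lo_factor] in Hp.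
  - destruct Hp as [<- | []]. apply Rmult_le_pos; [apply pos_INR | left; apply weight_pos; auto].
  - unfold lo_other in Hp. apply in_map_iff in Hp. destruct Hp as [j [<- _]]. cbn [fst].
    unfold Rdiv. apply Rmult_le_pos; [apply pos_INR |].
    left; apply Rinv_0_lt_compat, lt_0_INR. unfold lo_index; lia.
Qed.

Lemma lower_step_valid : forall k N eta, (0 < N)%nat -> 0 < eta < / INR N -> step_valid (S k) (lower_step (S k) N eta).
Proof. intros k N eta HN He c B Hq. assert (HNp : 0 < INR N) by (apply lt_0_INR; lia).
 assert (Heta : eta <= 1 / INR N) by (unfold Rdiv; lra).
 unfold lower_step in Hq. apply in_flat_map in Hq. destruct Hq as [r [Hr Hq]]. apply in_seq in Hr.
 split.
 - apply (tensor_coef_nonneg (lo_factor N eta r) (S k)) with (q := (c,B)); auto.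
   intros i p _ Hp. apply (lo_factor_coef_nonneg N eta r i); auto; lia.
 - apply (tensor_boxes_ok (lo_factor N eta r) (S k)) with (q := (c,B)); auto. intros i p Hi Hp. destruct i.
   + change (lo_factor N eta r 0) with (lo_first N eta r) in Hp. destruct Hp as [E|[]]; subst; cbn [fst snd].
     replace (INR (N - r) / INR N) with ((INR (N - r) - 1) / INR N + 1 / INR N) by (field; lra). lra.
   + change (lo_factor N eta r (S i)) with (lo_other N eta r) in Hp. unfold lo_other in Hp. apply in_map_iff in Hp.
     destruct Hp as [j [E _]]; subst; cbn [fst snd].
     replace (INR (lo_index r j) / INR N) with ((INR (lo_index r j) - 1) / INR N + 1 / INR N) by (field; lra). lra. Qed.

Lemma seg_val_mul_le (p : seg) (y : R) :
  0 <= fst p -> 0 <= y -> fst p * snd (snd p) <= 1 -> seg_val p y * y <= 1.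
Proof.
  intros Hc Hy Hch. unfold seg_val.
  destruct (Rle_dec (fst (snd p)) y); [destruct (Rle_dec y (snd (snd p))) |]; try lra.
  apply Rle_trans with (fst p * snd (snd p)); auto. apply Rmult_le_compat_l; auto.
Qed.

Lemma lo_first_val_le (N r : nat) (eta y : R) :
  (r < N)%nat -> 0 <= y -> step1_val (lo_first N eta r) y * y <= 1.
Proof.
  intros Hr Hy. unfold lo_first, step1_val; cbn [fold_right]. rewrite Rplus_0_r.
  apply seg_val_mul_le; cbn [fst snd]; auto.
  - apply Rmult_le_pos; [apply pos_INR | left; apply weight_pos; auto].
  - unfold weight. rewrite minus_INR by lia.
    assert (INR r < INR N) by (apply lt_INR; lia). assert (0 <= INR r) by apply pos_INR.
    right. field. split; lra.
Qed.

(* The other factors of the lower function stay below [1/y]: their shrunk cells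
   are disjoint and each segment stays below [1/y]. *)
Lemma lo_other_val_le (N r : nat) (eta y : R) :
  (0 < N)%nat -> 0 < eta -> 0 <= y -> step1_val (lo_other N eta r) y * y <= 1.
Proof.
  intros HN Heta Hy. assert (HNp : 0 < INR N) by (apply lt_0_INR; lia).
  unfold lo_other. rewrite step1_val_seq, <- sumN_scalr. apply sum_atmost1.
  - intros j Hj. assert (0 < INR (lo_index r j)) by (apply lt_0_INR; unfold lo_index; lia).
    assert (Hc : 0 <= INR N / INR (lo_index r j)) by (apply Rlt_le, Rdiv_lt_0_compat; lra).
    split.
    + apply Rmult_le_pos; auto. unfold seg_val; cbn [fst snd].
      destruct (Rle_dec _ _); [destruct (Rle_dec _ _) |]; lra.
    + apply seg_val_mul_le; cbn [fst snd]; auto. right. field. lra.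
  - intros j1 j2 Hj1 Hj2 Hn1 Hn2.
    assert (T1 := seg_val_neq0 _ _ (fun E => Hn1 (Rmult_eq_0_compat_r _ _ E))).
    assert (T2 := seg_val_neq0 _ _ (fun E => Hn2 (Rmult_eq_0_compat_r _ _ E))).
    cbn [fst snd] in T1, T2.
    assert (E := cells_disjoint N eta _ _ _ HNp Heta T1 T2). unfold lo_index in E. lia.
Qed.

(* On [V_m] the lower function stays below the integrand: each of its tensor
   terms does, and the terms have disjoint supports in the first coordinate. *)
Lemma lower_step_le_inv (m N : nat) (eta : R) (x : nat -> R) :
  (0 < N)%nat -> 0 < eta -> (forall i, (i < S m)%nat -> 0 <= x i <= 1) ->
  step_val (S m) (lower_step (S m) N eta) x * prodR (S m) x <= 1.
Proof.
  intros HN Heta H01. assert (HNp : 0 < INR N) by (apply lt_0_INR; lia).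
  unfold lower_step. rewrite step_val_flatseq, <- sumN_scalr. apply sum_atmost1.
  - intros r Hr. rewrite step_val_tensor, <- prodR_mult. split.
    + apply prodR_nonneg. intros i Hi. apply Rmult_le_pos; [| apply H01; auto].
      apply step1_val_nonneg. intros p Hp. apply (lo_factor_coef_nonneg N eta r i); auto.
    + rewrite <- (pow1 (S m)), <- prodR_const. apply prodR_le. intros i Hi. split.
      * apply Rmult_le_pos; [| apply H01; auto].
        apply step1_val_nonneg. intros p Hp. apply (lo_factor_coef_nonneg N eta r i); auto.
      * destruct i as [|i]; cbn [lo_factor].
        -- apply lo_first_val_le; auto. apply H01; lia.
        -- apply lo_other_val_le; auto. apply H01; auto.
  - intros r1 r2 Hr1 Hr2 Hn1 Hn2. rewrite step_val_tensor, prodR_S0 in Hn1, Hn2.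
    assert (A1 : step1_val (lo_first N eta r1) (x 0%nat) <> 0) by (intro E; apply Hn1; cbn [lo_factor]; rewrite E; ring).
    assert (A2 : step1_val (lo_first N eta r2) (x 0%nat) <> 0) by (intro E; apply Hn2; cbn [lo_factor]; rewrite E; ring).
    unfold lo_first, step1_val in A1, A2. cbn [fold_right] in A1, A2. rewrite Rplus_0_r in A1, A2.
    apply seg_val_neq0 in A1. apply seg_val_neq0 in A2. cbn [fst snd] in A1, A2.
    assert (E := cells_disjoint N eta _ _ _ HNp Heta A1 A2). lia.
Qed.

Lemma shrunk_cell_unit (N c : nat) (eta y : R) :
  (1 <= c <= N)%nat -> 0 < eta -> (INR c - 1) / INR N + eta <= y <= INR c / INR N -> 0 <= y <= 1.
Proof.
  intros Hc Heta Hy. assert (0 < INR N) by (apply lt_0_INR; lia).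
  assert (1 <= INR c <= INR N) by (split; [apply (le_INR 1) | apply le_INR]; lia).
  assert (0 <= (INR c - 1) / INR N) by (apply Rmult_le_pos; [lra | left; apply Rinv_0_lt_compat; lra]).
  assert (INR c / INR N <= 1) by (apply Rmult_le_reg_r with (INR N); [lra |]; field_simplify; lra).
  lra.
Qed.

(* The lower function vanishes outside [V_m]: a positive tensor term puts [x_0]
   in the shrunk cell [N - r] and every other coordinate in a cell [>= r + 2]. *)
Lemma lower_step_support (m N : nat) (eta : R) (x : nat -> R) :
  (0 < N)%nat -> 0 < eta -> 0 < step_val (S m) (lower_step (S m) N eta) x -> In_V (S m) x.
Proof.
  intros HN Heta Hpos. assert (HNp : 0 < INR N) by (apply lt_0_INR; lia).
  unfold lower_step in Hpos. rewrite step_val_flatseq in Hpos.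
  destruct (sumN_pos_ex _ _ Hpos) as [r [Hr Hpr]]. rewrite step_val_tensor in Hpr.
  assert (Hall := prodR_pos_each (S m) _ (fun i Hi =>
    step1_val_nonneg _ _ (fun p Hp => lo_factor_coef_nonneg N eta r i p Hr Hp)) Hpr).
  assert (Hx0 : (INR (N - r) - 1) / INR N + eta <= x 0%nat <= INR (N - r) / INR N).
  { destruct (step1_val_pos_in _ _ (Hall O ltac:(lia))) as [p [[<- | []] Hy]]. exact Hy. }
  assert (Hxj : forall j, (1 <= j < S m)%nat -> exists b, (r + 2 <= b <= N)%nat /\
                 (INR b - 1) / INR N + eta <= x j <= INR b / INR N).
  { intros [|j] Hj; [lia |].
    destruct (step1_val_pos_in _ _ (Hall (S j) ltac:(lia))) as [p [Hp Hy]].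
    cbn [lo_factor] in Hp. unfold lo_other in Hp. apply in_map_iff in Hp.
    destruct Hp as [i [<- Hi]]. apply in_seq in Hi.
    exists (lo_index r i). split; [unfold lo_index; lia | exact Hy]. }
  split.
  - intros [|i] Hi.
    + apply (shrunk_cell_unit N (N - r) eta); auto. lia.
    + destruct (Hxj (S i) ltac:(lia)) as [b [Hb Hy]]. apply (shrunk_cell_unit N b eta); auto. lia.
  - intros j Hj. destruct (Hxj j Hj) as [b [Hb Hy]].
    assert (Hrb : INR (r + 2) <= INR b) by (apply le_INR; lia).
    rewrite plus_INR in Hrb. rewrite minus_INR in Hx0 by lia. change (INR 2) with 2 in Hrb.
    assert ((INR N - INR r - 1) / INR N + (INR b - 1) / INR N >= 1).
    { replace ((INR N - INR r - 1) / INR N + (INR b - 1) / INR N)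
        with ((INR N - INR r - 1 + (INR b - 1)) / INR N) by (field; lra).
      apply Rle_ge, Rmult_le_reg_r with (INR N); [lra |]. field_simplify; lra. }
    lra.
Qed.

Lemma lower_step_below : forall k' N eta, let m := S (S k') in (0 < N)%nat -> 0 < eta < / INR N ->
  below_integrand m (lower_step m N eta).
Proof.
  intros k' N eta m HN He x. split.
  - intros [H01 _] _. apply lower_step_le_inv; auto. lra.
  - intros HV. apply Rnot_lt_le. intros Hpos. apply HV. apply (lower_step_support (S k') N eta); auto. lra.
Qed.

Lemma lower_sum_le_partial (k' M : nat) (s : step_fun) :
  step_valid (S (S k')) s -> below_integrand (S (S k')) s ->
  step_int (S (S k')) s <= INR (fact (S k')) * harm_pow (S (S k')) (S M)
    + (12 * INR (S k') + INR (S (S k')) * coef_sum s) * disc_error (S M) (S (S k')).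
Proof.
  intros Hval Hbel. set (k := S k'). set (m := S k). set (C := coef_sum s).
  set (E := disc_error (S M) m).
  assert (HC : 0 <= C) by (apply coef_sum_nonneg; intros [c B] Hq; apply (Hval c B Hq)).
  assert (HE : / INR (S M) <= E) by (apply disc_error_ge; lia).
  assert (Hk : 0 <= INR k) by apply pos_INR.
  assert (Hm : 0 <= INR m) by apply pos_INR.
  assert (Hok : boxes_ok m s) by (intros [c B] Hq i Hi; apply (Hval c B Hq); auto).
  assert (Hdom : step_int m s <= step_int m (upper_step m (S (S M)) (S M) C)).
  { apply step_int_mono; auto.
    - apply upper_step_boxes_ok; lia.
    - intros x. apply upper_step_dominates; auto; lia. }
  unfold m in Hdom. rewrite upper_step_int with (K := S M) in Hdom by reflexivity.
  assert (Htail := shifted_tail_sum_upper M k'). cbv zeta in Htail. unfold tail_pow in Htail. fold k m in Htail.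
  assert (Herr := log_pow_weight_harm_sum_bound M k). fold m E in Herr.
  assert (Hlayers : C / INR (S (S M)) <= C * E).
  { assert (HNp : 0 < INR (S M)) by apply INR_S_pos.
    assert (HNN : INR (S M) < INR (S (S M))) by (apply lt_INR; lia).
    unfold Rdiv. apply Rmult_le_compat_l; auto.
    apply Rle_trans with (/ INR (S M)); auto. apply Rinv_le_contravar; lra. }
  assert (Hmain : 6 * INR k * log_pow (S M) k * weight_harm_sum (S M) <= 12 * INR k * E)
    by (rewrite Rmult_assoc; nra).
  assert (INR m * (C / INR (S (S M))) <= INR m * (C * E)) by (apply Rmult_le_compat_l; auto).
  fold k m in Hdom. lra.
Qed.

(* Every lower sum is at most [(m-1)! zeta(m)]: let the mesh tend to 0 in the
   previous estimate. *)
Lemma lower_sum_le (k' : nat) (z : R) (s : step_fun) :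
  (forall N, harm_pow (S (S k')) N <= z) ->
  step_valid (S (S k')) s -> below_integrand (S (S k')) s ->
  step_int (S (S k')) s <= INR (fact (S k')) * z.
Proof.
  intros Hle Hval Hbel. apply Rle_plus_epsilon. intros eps Heps.
  set (D := 12 * INR (S k') + INR (S (S k')) * coef_sum s + 1).
  assert (HD : 0 < D).
  { assert (0 <= coef_sum s) by (apply coef_sum_nonneg; intros [c B] Hq; apply (Hval c B Hq)).
    assert (0 <= INR (S (S k')) * coef_sum s) by (apply Rmult_le_pos; [apply pos_INR | auto]).
    unfold D. generalize (pos_INR (S k')). lra. }
  destruct (error_term_small (S (S k')) (eps / D) 0) as [[|M] [_ [HM HE]]];
    [apply Rdiv_lt_0_compat; lra | lia |].
  assert (Hpartial := lower_sum_le_partial k' M s Hval Hbel).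
  assert (HF : 0 <= INR (fact (S k'))) by apply pos_INR.
  assert (Hz := Hle (S M)).
  assert (HE0 : 0 <= disc_error (S M) (S (S k'))) by (apply Rle_trans with (/ INR (S M));
    [left; apply Rinv_0_lt_compat, INR_S_pos | apply disc_error_ge; lia]).
  assert (HDE : D * disc_error (S M) (S (S k')) < eps).
  { apply Rmult_lt_reg_r with (/ D); [apply Rinv_0_lt_compat; lra |].
    replace (D * disc_error (S M) (S (S k')) * / D) with (disc_error (S M) (S (S k'))) by (field; lra).
    exact HE. }
  assert (INR (fact (S k')) * harm_pow (S (S k')) (S M) <= INR (fact (S k')) * z)
    by (apply Rmult_le_compat_l; auto).
  unfold D in HDE. nra.
Qed.

Definition shifted_lower_sum (N k : nat) : R := sumN N (fun r => weight N r * tail_pow N k (S r)).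

Lemma shifted_lower_sum_nonneg (N k : nat) : 0 <= shifted_lower_sum N k.
Proof.
  apply sumN_nonneg. intros r Hr. apply Rmult_le_pos; [left; apply weight_pos; auto |].
  apply tail_pow_nonneg; lia.
Qed.

Lemma shifted_lower_sum_bounds (M k : nat) :
  INR (fact k) * harm_pow (S k) (S M)
    - 2 * (INR (fact k) * INR (k * k) + INR k) * disc_error (S M) (S k) <= shifted_lower_sum (S M) k
  /\ shifted_lower_sum (S M) k <= INR (fact k) * harm_pow (S k) (S M).
Proof.
  unfold shifted_lower_sum. split.
  - assert (Hlow := shifted_tail_sum_lower M k). cbv zeta in Hlow.
    assert (Herr := log_pow_weight_harm_sum_bound M k).
    assert (0 <= INR (fact k) * INR (k * k) + INR k)
      by (generalize (pos_INR (fact k)) (pos_INR (k * k)) (pos_INR k); nra).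
    rewrite Rmult_assoc in Hlow. nra.
  - apply Rle_trans with (sumN (S M) (fun r => weight (S M) r * tail_pow (S M) k r)).
    + apply sumN_le. intros r Hr. apply Rmult_le_compat_l; [left; apply weight_pos; auto |].
      unfold tail_pow. apply pow_incr.
      assert (harm r <= harm (S r) <= harm (S M)) by (split; apply harm_mono; lia). lra.
    + rewrite <- sum_avg_iter_weight. apply tail_sum_le.
      intros r Hr. left; apply weight_pos; auto.
Qed.

Lemma shifted_lower_sum_close (k : nat) (z eps : R) :
  (forall N, harm_pow (S k) N <= z) ->
  (forall e, 0 < e -> exists N0, forall N, (N0 <= N)%nat -> z - e < harm_pow (S k) N) ->
  0 < eps -> exists M, INR (fact k) * z - eps <= shifted_lower_sum (S M) k <= INR (fact k) * z.
Proof.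
  intros Hle Hlim Heps. set (F := INR (fact k)).
  assert (HF : 1 <= F) by (apply (le_INR 1), lt_O_fact).
  destruct (Hlim (eps / (2 * F))) as [N0 HN0]; [apply Rdiv_lt_0_compat; lra |].
  set (D := 2 * (F * INR (k * k) + INR k) + 1).
  assert (HD : 0 < D).
  { assert (0 <= F * INR (k * k)) by (apply Rmult_le_pos; [lra | apply pos_INR]).
    unfold D. generalize (pos_INR k). lra. }
  destruct (error_term_small (S k) (eps / (2 * D)) N0) as [[|M] [HN0N [HN2 HE]]];
    [apply Rdiv_lt_0_compat; lra | lia |].
  exists M. destruct (shifted_lower_sum_bounds M k) as [Hlo Hhi]. fold F in Hlo, Hhi.
  assert (Hz := HN0 (S M) HN0N). assert (Hz' := Hle (S M)).
  assert (HE0 : 0 <= disc_error (S M) (S k)) by (apply Rle_trans with (/ INR (S M));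
    [left; apply Rinv_0_lt_compat, INR_S_pos | apply disc_error_ge; lia]).
  assert (Hharm : F * z - eps / 2 <= F * harm_pow (S k) (S M)).
  { replace (F * z - eps / 2) with (F * (z - eps / (2 * F))) by (field; lra).
    apply Rmult_le_compat_l; lra. }
  assert (Herr : 2 * (F * INR (k * k) + INR k) * disc_error (S M) (S k) <= eps / 2).
  { apply Rle_trans with (D * disc_error (S M) (S k)); [unfold D; nra |].
    replace (eps / 2) with (D * (eps / (2 * D))) by (field; lra). apply Rmult_le_compat_l; lra. }
  assert (F * harm_pow (S k) (S M) <= F * z) by (apply Rmult_le_compat_l; lra).
  lra.
Qed.

Lemma lower_step_int_ge (k N : nat) (eta : R) :
  0 <= INR N * eta <= 1 ->
  (1 - INR (S k) * (INR N * eta)) * shifted_lower_sum N k <= step_int (S k) (lower_step (S k) N eta).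
Proof.
  intros Heta. rewrite lower_step_int. fold (shifted_lower_sum N k).
  apply Rmult_le_compat_r; [apply shifted_lower_sum_nonneg | apply bernoulli; auto].
Qed.

Lemma shrink_exists (a NN L e : R) :
  0 < a -> 0 < NN -> 0 <= L -> 0 < e -> exists eta, 0 < eta < / NN /\ a * (NN * eta) * L <= e.
Proof.
  intros Ha HN HL He. set (eta := Rmin (/ (2 * NN)) (e / (a * NN * (L + 1)))).
  assert (Heta : 0 < eta).
  { apply Rmin_glb_lt; [apply Rinv_0_lt_compat; lra |].
    apply Rdiv_lt_0_compat; [lra |]. repeat apply Rmult_lt_0_compat; lra. }
  exists eta. split; [split; auto |].
  - apply Rle_lt_trans with (/ (2 * NN)); [apply Rmin_l | apply Rinv_lt_contravar; nra].
  - assert (eta <= e / (a * NN * (L + 1))) by apply Rmin_r.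
    apply Rle_trans with (a * NN * (e / (a * NN * (L + 1))) * (L + 1)); [| right; field; lra].
    rewrite <- Rmult_assoc. apply Rmult_le_compat; try lra.
    + apply Rmult_le_pos; [apply Rmult_le_pos |]; lra.
    + apply Rmult_le_compat_l; [apply Rmult_le_pos |]; lra.
Qed.

(* Every number below [(m-1)! zeta(m)] is exceeded by a lower sum: take the
   lower step function at a fine mesh [1/N] and a small shrinking [eta]. *)
Lemma lower_sums_approx (k' : nat) (z b : R) :
  (forall N, harm_pow (S (S k')) N <= z) ->
  (forall eps, 0 < eps -> exists N0, forall N, (N0 <= N)%nat -> z - eps < harm_pow (S (S k')) N) ->
  b < INR (fact (S k')) * z -> exists v, lower_sums (S (S k')) v /\ b < v.
Proof.
  intros Hle Hlim Hb. set (k := S k'). set (m := S k). set (V := INR (fact k) * z).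
  fold k m V in Hle, Hlim, Hb.
  set (eps := V - b). assert (Heps : 0 < eps) by (unfold eps; lra).
  destruct (shifted_lower_sum_close k z (eps / 2) Hle Hlim) as [M HL]; [lra |]. fold V in HL.
  set (L := shifted_lower_sum (S M) k) in *.
  assert (HL0 : 0 <= L) by apply shifted_lower_sum_nonneg.
  set (NN := INR (S M)). assert (HNN : 0 < NN) by apply INR_S_pos.
  destruct (shrink_exists (INR m) NN L (eps / 4)) as [eta [[Heta1 Heta2] Hloss]];
    [apply INR_S_pos | auto | auto | lra |].
  assert (HNeta : 0 <= NN * eta <= 1).
  { split; [nra |]. assert (Hlt1 : NN * eta < NN * / NN) by (apply Rmult_lt_compat_l; lra).
    rewrite Rinv_r in Hlt1 by lra. lra. }
  exists (step_int m (lower_step m (S M) eta)). split.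
  - exists (lower_step m (S M) eta). split; [| split; [| reflexivity]].
    + apply lower_step_valid; [lia | split; auto].
    + apply lower_step_below; [lia | split; auto].
  - assert (Hint := lower_step_int_ge k (S M) eta HNeta). fold m NN L in Hint.
    unfold eps in *. nra.
Qed.

Theorem corollary6 (m : nat) (hm : (2 <= m)%nat) :
  exists z : R, infinite_sum (zeta_term m) z /\
    is_lub (lower_sums m) (INR (fact (m - 1)) * z).
Proof.
  destruct m as [|[|k']]; try lia. replace (S (S k') - 1)%nat with (S k') by lia.
  destruct (zeta_conv k') as [z [Hz [Hle Hlim]]].
  exists z. split; [exact Hz | split].
  - intros v [s [Hval [Hbel ->]]]. exact (lower_sum_le k' z s Hle Hval Hbel).
  - intros b Hb. apply Rnot_lt_le. intros Hlt.
    destruct (lower_sums_approx k' z b Hle Hlim Hlt) as [v [Hv Hbv]].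
    specialize (Hb v Hv). lra.
Qed.
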